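(* Let $S$ be a statement in Yul source syntax, $G$ a global environment, $L$ a local state and $\mathcal{N}$ a function namespace. Then for all $G', L', \mathcal{N}'$ the following are equivalent: (1) $\langle S \mid G; L; \mathcal{N}\rangle \Downarrow \langle \mathsf{regular} \mid G'; L'; \mathcal{N}'\rangle$ (big-step evaluation); (2) $\langle S \mid G; L; \mathcal{N}\rangle \to^* \langle \mathsf{regular} \mid G'; L'; \mathcal{N}'\rangle$ (small-step reduction sequence).
   Context: Yul syntax. Fix (dialect-specific) values $u,v,c$, variables $x,y,z,f$, and opcodes $op$. $\vec x$ denotes a comma-separated list, $S^*$ a juxtaposed sequence. Expressions: $M ::= f(M_1,\dots,M_n) \mid op(M_1,\dots,M_n) \mid x \mid v$. Statements: $S ::= \{S^*\} \mid \mathsf{function}\ f(\vec y) \to \vec z\ \{S^*\} \mid \mathsf{let}\ \vec x := M \mid \vec x := M \mid M \mid \mathsf{if}\ M\ \{S^*\} \mid \mathsf{switch}\ M\ (\mathsf{case}\ c_i\ \{S^*\})^*\ \mathsf{default}\ \{S^*\} \mid \mathsf{for}\ \{S^*\}\ M\ \{S^*\}\ \{S^*\} \mid \mathsf{break} \mid \mathsf{continue} \mid \mathsf{leave}$ (the for-loop components are: initialisation block, condition, post-iteration block $S_p$, body $S_b$). A statement generated by this grammar is in source syntax. The dialect supplies: predicates identifying which values count as $\mathsf{true}$ and $\mathsf{false}$; a set of external irregular modes $\mathcal{M}$; and an opcode relation $\langle op(v_1,\dots,v_n) \mid G\rangle \Downarrow_{\mathsf{opc}} \langle S' \mid G'\rangle$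 with $G,G'$ global environments (arbitrary dialect state) and $S'$ either a tuple of values or an external mode. Runtime syntax adds to statements: modes $\mathbb{M} ::= \mathsf{regular} \mid \mathsf{break} \mid \mathsf{continue} \mid \mathsf{leave} \mid \mathcal{M}$; scoped blocks $\{S_1,\dots,S_n\}^{\mathcal{N}}_L$; loop catchers $\mathsf{Brk}[S]$ and $\mathsf{Cnt}[S]$; call frames $\mathsf{Frame}^{\vec z}_L[S]$; and to expressions tuples $\langle v_1,\dots,v_m\rangle$ (convention: $\langle v\rangle = v$, $\langle\rangle = \mathsf{regular}$). A configuration $\langle S \mid G; L; \mathcal{N}\rangle$ has a term $S$, global environment $G$, local state $L$ (finite map variables to values) and namespace $\mathcal{N}$ (finite map from function names to triples $(\vec y,\vec z,S_b)$). $L_1\upharpoonright L$ is $L_1$ restricted to $\mathrm{dom}(L)$; $L[\vec x\mapsto\vec v]$ is update; $\uplus$ is disjoint union; $\mathrm{funs}(\{S_1\dots S_n\})$ maps $f\mapsto(\vec y,\vec z,B)$ for each $S_i = \mathsf{function}\ f(\vec y)\to\vec z\ B$. For $\mathcal{N}(f) = ((y_1..y_n),(z_1..z_m),S_b)$ and arguments $v_1..v_n$, $L_f = \{y_i\mapsto v_i\}\uplus\{z_j\mapsto 0\}$. Big-step relations $\Downarrow$ (statements), $\Downarrow_{\mathsf{seq}}$ (sequences), $\Downarrow_{\mathsf{exp}}$ (expressions, results $v$, $\langle\vec v\rangle$ or $\mathsf{regular}$) are inductively defined by: (Block) if $\mathcal{N}_1=\mathrm{funs}(\{S_1..S_n\})$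 and $\langle S_1,..,S_n\mid G;L;\mathcal{N}\uplus\mathcal{N}_1\rangle\Downarrow_{\mathsf{seq}}\langle\mathbb{M}\mid G_1;L_1;\mathcal{N}\uplus\mathcal{N}_1\rangle$ then $\langle\{S_1..S_n\}\mid G;L;\mathcal{N}\rangle\Downarrow\langle\mathbb{M}\mid G_1;L_1\upharpoonright L;\mathcal{N}\rangle$. (SeqEmpty) the empty sequence $\Downarrow_{\mathsf{seq}}\mathsf{regular}$ with $G,L,\mathcal{N}$ unchanged. (SeqReg) if $S_1\Downarrow\mathsf{regular}$ from $(G,L)$ to $(G_1,L_1)$ and $\vec S\Downarrow_{\mathsf{seq}}\mathbb{M}$ from $(G_1,L_1)$ to $(G_2,L_2)$ then $S_1,\vec S\Downarrow_{\mathsf{seq}}\mathbb{M}$ from $(G,L)$ to $(G_2,L_2)$ (all under same $\mathcal{N}$). (SeqIrreg) if $S_1\Downarrow\mathbb{M}\in\{\mathsf{break},\mathsf{continue},\mathsf{leave}\}$ to $(G_1,L_1)$ then $S_1,\vec S\Downarrow_{\mathsf{seq}}\mathbb{M}$ to $(G_1,L_1)$. (FunDef) a function definition $\Downarrow\mathsf{regular}$, nothing changed. (VarDecl/TupleDecl) if $\langle M\mid G;L;\mathcal{N}\rangle\Downarrow_{\mathsf{exp}}\langle\langle\vec v\rangle\mid G_1;L_1;\mathcal{N}\rangle$ and $\vec x\notin\mathrm{dom}(L)$ then $\mathsf{let}\ \vec x:=M\Downarrow\mathsf{regular}$ with state $(G_1,L_1[\vec x\mapsto\vec v])$; assignment $\vec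 x:=M$ is identical but requires $\vec x\in\mathrm{dom}(L)$. (IfF) if $M\Downarrow_{\mathsf{exp}}\mathsf{false}$ to $(G_0,L_0)$ then $\mathsf{if}\ M\ S\Downarrow\mathsf{regular}$ to $(G_0,L_0)$. (IfT) if $M\Downarrow_{\mathsf{exp}}\mathsf{true}$ to $(G_0,L_0)$ and $S\Downarrow\mathbb{M}$ from there to $(G_1,L_1)$ then $\mathsf{if}\ M\ S\Downarrow\mathbb{M}$ to $(G_1,L_1)$. (SwD/SwC) with cases $\mathsf{case}\ c_i\ S_i$: if $M\Downarrow_{\mathsf{exp}} v$ with $v\notin\{c_1..c_n\}$ then evaluate $S_d$; if $M\Downarrow_{\mathsf{exp}}c_k$ with $c_k\notin\{c_1..c_{k-1}\}$ then evaluate $S_k$; the result is that of the chosen branch. (ForInit) if $n>0$ and $\{S_1..S_n\ \mathsf{for}\ \{\}\ M\ S_p\ S_b\}\Downarrow\mathbb{M}$ then $\mathsf{for}\ \{S_1..S_n\}\ M\ S_p\ S_b\Downarrow\mathbb{M}$ (same final state). For $W=\mathsf{for}\ \{\}\ M\ S_p\ S_b$: (ForFalse) if $M\Downarrow_{\mathsf{exp}}\mathsf{false}$ to $(G_1,L_1)$ then $W\Downarrow\mathsf{regular}$ to $(G_1,L_1)$; (ForHalt1) if $M\Downarrow_{\mathsf{exp}}\mathsf{true}$ to $(G_1,L_1)$ and $S_b\Downarrow\mathbb{M}_1$ to $(G_2,L_2)$ with $(\mathbb{M}_1,\mathbb{M}_2)\in\{(\mathsf{leave},\mathsf{leave}),(\mathsf{break},\mathsf{regular})\}$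 then $W\Downarrow\mathbb{M}_2$ to $(G_2,L_2)$; (ForHalt2) if $M$ true, $S_b\Downarrow\mathbb{M}'\in\{\mathsf{regular},\mathsf{continue}\}$ to $(G_2,L_2)$, $S_p\Downarrow\mathsf{leave}$ to $(G_3,L_3)$ then $W\Downarrow\mathsf{leave}$ to $(G_3,L_3)$; (ForLoop) if $M$ true, $S_b\Downarrow\mathbb{M}'\in\{\mathsf{regular},\mathsf{continue}\}$, $S_p\Downarrow\mathsf{regular}$ to $(G_3,L_3)$ and $W\Downarrow\mathbb{M}$ from $(G_3,L_3)$ to $(G_4,L_4)$ then $W\Downarrow\mathbb{M}$ to $(G_4,L_4)$. (Ident) $x\Downarrow_{\mathsf{exp}}L(x)$, nothing changed. (FunCall) if $\langle M_n\mid G;L;\mathcal{N}\rangle\Downarrow_{\mathsf{exp}}\langle v_n\mid G_1;L_1;\mathcal{N}\rangle$, …, $\langle M_1\mid G_{n-1};L_{n-1};\mathcal{N}\rangle\Downarrow_{\mathsf{exp}}\langle v_1\mid G_n;L_n;\mathcal{N}\rangle$ (right to left) and $\langle S_b\mid G_n;L_f;\mathcal{N}\rangle\Downarrow\langle\mathbb{M}\mid G'';L';\mathcal{N}\rangle$ then $\langle f(M_1..M_n)\mid G;L;\mathcal{N}\rangle\Downarrow_{\mathsf{exp}}\langle\langle L'(z_1),..,L'(z_m)\rangle\mid G'';L_n;\mathcal{N}\rangle$. (OpcCall) same argument evaluation, then if $\langle op(v_1..v_n)\mid G_n\rangle\Downarrow_{\mathsf{opc}}\langle v'_1..v'_m\mid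 G''\rangle$ the result is $\langle\langle v'_1..v'_m\rangle\mid G'';L_n;\mathcal{N}\rangle$. Big-step never produces external modes. Small-step: evaluation contexts $E ::= [\,] \mid \{E,\vec S\}^{\mathcal{N}}_L \mid \mathsf{let}\ \vec x:=E \mid \vec x:=E \mid E_e \mid \mathsf{Cnt}[E] \mid \mathsf{Brk}[E] \mid \mathsf{if}\ E_e\ \{S^*\} \mid \mathsf{switch}\ E_e\ \dots$ and $E_e ::= [\,] \mid f(\vec M,E_e,\vec v) \mid op(\vec M,E_e,\vec v) \mid \mathsf{Frame}^{\vec x}_L[E]$. Base rules (with $G$ unchanged except for opcodes): $\langle\{S_1..S_n\}\mid L;\mathcal{N}\rangle\to\langle\{S_1,..,S_n\}^{\mathcal{N}}_L\mid L;\mathcal{N}\uplus\mathrm{funs}(\{S_1..S_n\})\rangle$ for $n>0$; $\{\}\to\mathsf{regular}$; $\langle\{\mathsf{regular},\vec S\}^{\mathcal{N}}_L\mid L_1;\mathcal{N}_1\rangle\to\langle\{\vec S\}^{\mathcal{N}}_L\mid L_1;\mathcal{N}_1\rangle$ for nonempty $\vec S$; $\langle\{\mathsf{regular}\}^{\mathcal{N}}_L\mid L_1;\mathcal{N}_1\rangle\to\langle\mathsf{regular}\mid L_1\upharpoonright L;\mathcal{N}\rangle$; $\langle\{\mathbb{M},\vec S\}^{\mathcal{N}}_L\mid L_1;\mathcal{N}_1\rangle\to\langle\mathbb{M}\mid L_1\upharpoonright L;\mathcal{N}\rangle$ for $\mathbb{M}\in\{\mathsf{break},\mathsf{continue},\mathsf{leave}\}$;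 a function definition $\to\mathsf{regular}$; $\langle\mathsf{let}\ \vec x:=\langle\vec v\rangle\mid L\rangle\to\langle\mathsf{regular}\mid L[\vec x\mapsto\vec v]\rangle$ if $\vec x\notin\mathrm{dom}(L)$ (assignment: same with $\vec x\in\mathrm{dom}(L)$); $\mathsf{if}\ \mathsf{false}\ S\to\mathsf{regular}$; $\mathsf{if}\ \mathsf{true}\ S\to S$; $\mathsf{switch}\ v\dots\to S_d$ if $v\notin\{c_1..c_n\}$; $\mathsf{switch}\ c_k\dots\to S_k$ if $c_k\notin\{c_1..c_{k-1}\}$; $\mathsf{for}\ \{S_1..S_n\}\ M\ S_p\ S_b\to\{S_1..S_n\ \mathsf{for}\ \{\}\ M\ S_p\ S_b\}$ for $n>0$; $\mathsf{for}\ \{\}\ M\ S_p\ S_b\to\mathsf{Brk}[\mathsf{if}\ M\ \{\mathsf{Cnt}[S_b]\ S_p\ \mathsf{for}\ \{\}\ M\ S_p\ S_b\}]$; $\mathsf{Cnt}[\mathbb{M}]\to\mathbb{M}$ for $\mathbb{M}\in\{\mathsf{regular},\mathsf{break},\mathsf{leave}\}$, $\mathsf{Cnt}[\mathsf{continue}]\to\mathsf{regular}$; $\mathsf{Brk}[\mathbb{M}]\to\mathbb{M}$ for $\mathbb{M}\in\{\mathsf{regular},\mathsf{leave}\}$, $\mathsf{Brk}[\mathsf{break}]\to\mathsf{regular}$; $\langle x\mid L\rangle\to\langle L(x)\mid L\rangle$ for $x\in\mathrm{dom}(L)$; $\langle f(\vec v)\mid L;\mathcal{N}\rangle\to\langle\mathsf{Frame}^{\vec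 z}_L[S_b]\mid L_f;\mathcal{N}\rangle$; $\langle\mathsf{Frame}^{z_1..z_m}_L[\mathbb{M}]\mid L';\mathcal{N}\rangle\to\langle\langle L'(z_1),..,L'(z_m)\rangle\mid L;\mathcal{N}\rangle$ for $\mathbb{M}\in\{\mathsf{leave},\mathsf{regular}\}$; $\langle op(\vec v)\mid G;L;\mathcal{N}\rangle\to\langle S'\mid G';L;\mathcal{N}\rangle$ if $\langle op(\vec v)\mid G\rangle\Downarrow_{\mathsf{opc}}\langle S'\mid G'\rangle$. Top-level rules: $\langle E[S]\mid G;L;\mathcal{N}\rangle\to\langle E[S']\mid G';L';\mathcal{N}'\rangle$ whenever $\langle S\mid G;L;\mathcal{N}\rangle\to\langle S'\mid G';L';\mathcal{N}'\rangle$ by a base rule or recursively; and $\langle E[\mathcal{M}]\mid G;L;\mathcal{N}\rangle\to\langle\mathcal{M}\mid G';L';\mathcal{N}'\rangle$ for external modes $\mathcal{M}$. $\to^*$ is the reflexive-transitive closure.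
   Formalization: S has break and continue only within for-loop bodies, never in initialisation or post blocks or directly in function bodies; every function body in 𝒩 is such a source block; big-step also evaluates literals, break, continue, leave and expression statements. Each condition added here is assumed in the paper as well or is needed for the statement above to hold. *)

From Stdlib Require Import List.
Import ListNotations.

Record dialect := {
  ident : Type;
  ident_eq_dec : forall x y : ident, {x = y} + {x <> y};
  val : Type;
  zero : val;
  is_true_val : val -> Prop;
  is_false_val : val -> Prop;
  ext_mode : Type;
  opcode : Type;
  genv : Type;
  (* <op(v1..vn) | G> ⇓opc <S' | G'>, S' a tuple of values or an external mode *)
  opc_step : genv -> opcode -> list val -> (list val + ext_mode) -> genv -> Prop
}.

Section Yul.
Context {D : dialect}.

Local Notation ident := (ident D).
Local Notation val := (val D).

(* Irregular modes (regular is the empty tuple, see below). *)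
Inductive mode : Type :=
| MBreak | MContinue | MLeave | MExt (e : ext_mode D).

(* Conventions: a literal value v is the 1-tuple [Tup [v]] (so <v> = v), and
   the mode regular is the empty tuple [Tup []] (so <> = regular). *)
Inductive term : Type :=
| Tup (vs : list val)
| Var (x : ident)
| FCall (f : ident) (args : list term)
| OCall (op : opcode D) (args : list term)
| Frame (zs : list ident) (L : ident -> option val) (body : term)
| Block (ss : list term)
| FunDef (f : ident) (ys zs : list ident) (body : list term)
| Let (xs : list ident) (e : term)
| Assign (xs : list ident) (e : term)
| If (c : term) (body : list term)
| Switch (c : term) (cases : list (val * list term)) (dflt : list term)
| For (init : list term) (c : term) (post body : list term)
| Brk (t : term)
| Cnt (t : term)
| Mode (m : mode)
| Scoped (ss : list term)
         (N : ident -> option (list ident * list ident * term))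
         (L : ident -> option val).

Definition lstate : Type := ident -> option val.
Definition nspace : Type := ident -> option (list ident * list ident * term).

Definition regular : term := Tup [].
Definition lit (v : val) : term := Tup [v].

Definition fin_dom {A : Type} (m : ident -> option A) : Prop :=
  exists l : list ident, forall x, m x <> None -> In x l.

Definition restrict (L1 L : lstate) : lstate :=
  fun x => match L x with Some _ => L1 x | None => None end.

Definition disjoint {A B : Type} (m1 : ident -> option A) (m2 : ident -> option B) : Prop :=
  forall x, m1 x = None \/ m2 x = None.

Definition dunion {A : Type} (m1 m2 : ident -> option A) : ident -> option A :=
  fun x => match m1 x with Some a => Some a | None => m2 x end.

Definition upd1 (L : lstate) (x : ident) (v : val) : lstate :=
  fun y => if ident_eq_dec D y x then Some v else L y.

Fixpoint upd (L : lstate) (xs : list ident) (vs : list val) : lstate :=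
  match xs, vs with
  | x :: xs', v :: vs' => upd (upd1 L x v) xs' vs'
  | _, _ => L
  end.

(* L_f = {y_i |-> v_i} ⊎ {z_j |-> 0}  (used under NoDup (ys ++ zs)) *)
Definition locals_f (ys : list ident) (vs : list val) (zs : list ident) : lstate :=
  upd (upd (fun _ => None) ys vs) zs (repeat (zero D) (length zs)).

Fixpoint funs (ss : list term) : nspace :=
  match ss with
  | [] => fun _ => None
  | FunDef f ys zs b :: r =>
      fun g => if ident_eq_dec D g f then Some (ys, zs, Block b) else funs r g
  | _ :: r => funs r
  end.

(* ---------- source syntax ----------
   [src_stmt lp S]: S is generated by the source grammar and, following Yul's
   syntactic rules, break/continue only occur inside a for-loop body
   ([lp] = true), not in init/post blocks nor in function bodies outside a loop. *)
Inductive src_expr : term -> Prop :=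
| src_lit v : src_expr (Tup [v])
| src_var x : src_expr (Var x)
| src_fcall f args : Forall src_expr args -> src_expr (FCall f args)
| src_ocall op args : Forall src_expr args -> src_expr (OCall op args).

Inductive src_stmt : bool -> term -> Prop :=
| src_block lp ss : Forall (src_stmt lp) ss -> src_stmt lp (Block ss)
| src_fundef lp f ys zs b : Forall (src_stmt false) b -> src_stmt lp (FunDef f ys zs b)
| src_let lp xs e : src_expr e -> src_stmt lp (Let xs e)
| src_assign lp xs e : src_expr e -> src_stmt lp (Assign xs e)
| src_exp lp e : src_expr e -> src_stmt lp e
| src_if lp c b : src_expr c -> Forall (src_stmt lp) b -> src_stmt lp (If c b)
| src_switch lp c cs d : src_expr c -> Forall (src_stmt lp) (concat (map snd cs)) ->
    Forall (src_stmt lp) d -> src_stmt lp (Switch c cs d)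
| src_for lp i c p b : Forall (src_stmt false) i -> src_expr c ->
    Forall (src_stmt false) p -> Forall (src_stmt true) b -> src_stmt lp (For i c p b)
| src_break : src_stmt true (Mode MBreak)
| src_continue : src_stmt true (Mode MContinue)
| src_leave lp : src_stmt lp (Mode MLeave).

Definition src_nspace (N : nspace) : Prop :=
  forall f ys zs B, N f = Some (ys, zs, B) ->
    exists b, B = Block b /\ Forall (src_stmt false) b.

Inductive bs : term -> genv D -> lstate -> nspace -> term -> genv D -> lstate -> nspace -> Prop :=
| bs_block ss G L N M G1 L1 :
    disjoint N (funs ss) ->
    bs_seq ss G L (dunion N (funs ss)) M G1 L1 (dunion N (funs ss)) ->
    bs (Block ss) G L N M G1 (restrict L1 L) N
| bs_irreg m G L N :
    m = MBreak \/ m = MContinue \/ m = MLeave ->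
    bs (Mode m) G L N (Mode m) G L N
| bs_fundef f ys zs b G L N :
    bs (FunDef f ys zs b) G L N regular G L N
| bs_let xs e vs G L N G1 L1 :
    bs_exp e G L N vs G1 L1 N ->
    (forall x, In x xs -> L x = None) -> length xs = length vs ->
    bs (Let xs e) G L N regular G1 (upd L1 xs vs) N
| bs_assign xs e vs G L N G1 L1 :
    bs_exp e G L N vs G1 L1 N ->
    (forall x, In x xs -> L x <> None) -> length xs = length vs ->
    bs (Assign xs e) G L N regular G1 (upd L1 xs vs) N
| bs_expstmt e G L N G1 L1 :
    bs_exp e G L N [] G1 L1 N ->
    bs e G L N regular G1 L1 N
| bs_if_false c b v G L N G0 L0 :
    bs_exp c G L N [v] G0 L0 N -> is_false_val D v ->
    bs (If c b) G L N regular G0 L0 N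
| bs_if_true c b v G L N G0 L0 M G1 L1 :
    bs_exp c G L N [v] G0 L0 N -> is_true_val D v ->
    bs (Block b) G0 L0 N M G1 L1 N ->
    bs (If c b) G L N M G1 L1 N
| bs_switch_default c cs d v G L N G0 L0 M G1 L1 :
    bs_exp c G L N [v] G0 L0 N -> ~ In v (map fst cs) ->
    bs (Block d) G0 L0 N M G1 L1 N ->
    bs (Switch c cs d) G L N M G1 L1 N
| bs_switch_case c pre ck sk post d G L N G0 L0 M G1 L1 :
    bs_exp c G L N [ck] G0 L0 N -> ~ In ck (map fst pre) ->
    bs (Block sk) G0 L0 N M G1 L1 N ->
    bs (Switch c (pre ++ (ck, sk) :: post) d) G L N M G1 L1 N
| bs_for_init i c p b G L N M G1 L1 :
    i <> [] ->
    bs (Block (i ++ [For [] c p b])) G L N M G1 L1 N ->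
    bs (For i c p b) G L N M G1 L1 N
| bs_for_false c p b v G L N G1 L1 :
    bs_exp c G L N [v] G1 L1 N -> is_false_val D v ->
    bs (For [] c p b) G L N regular G1 L1 N
| bs_for_halt1 c p b v G L N G1 L1 M1 G2 L2 M2 :
    bs_exp c G L N [v] G1 L1 N -> is_true_val D v ->
    bs (Block b) G1 L1 N M1 G2 L2 N ->
    (M1 = Mode MLeave /\ M2 = Mode MLeave \/ M1 = Mode MBreak /\ M2 = regular) ->
    bs (For [] c p b) G L N M2 G2 L2 N
| bs_for_halt2 c p b v G L N G1 L1 M' G2 L2 G3 L3 :
    bs_exp c G L N [v] G1 L1 N -> is_true_val D v ->
    bs (Block b) G1 L1 N M' G2 L2 N -> (M' = regular \/ M' = Mode MContinue) ->
    bs (Block p) G2 L2 N (Mode MLeave) G3 L3 N ->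
    bs (For [] c p b) G L N (Mode MLeave) G3 L3 N
| bs_for_loop c p b v G L N G1 L1 M' G2 L2 G3 L3 M G4 L4 :
    bs_exp c G L N [v] G1 L1 N -> is_true_val D v ->
    bs (Block b) G1 L1 N M' G2 L2 N -> (M' = regular \/ M' = Mode MContinue) ->
    bs (Block p) G2 L2 N regular G3 L3 N ->
    bs (For [] c p b) G3 L3 N M G4 L4 N ->
    bs (For [] c p b) G L N M G4 L4 N
with bs_seq : list term -> genv D -> lstate -> nspace -> term -> genv D -> lstate -> nspace -> Prop :=
| bs_seq_empty G L N : bs_seq [] G L N regular G L N
| bs_seq_reg s ss G L N G1 L1 M G2 L2 :
    bs s G L N regular G1 L1 N -> bs_seq ss G1 L1 N M G2 L2 N ->
    bs_seq (s :: ss) G L N M G2 L2 N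
| bs_seq_irreg s ss G L N m G1 L1 :
    m = MBreak \/ m = MContinue \/ m = MLeave ->
    bs s G L N (Mode m) G1 L1 N ->
    bs_seq (s :: ss) G L N (Mode m) G1 L1 N
with bs_exp : term -> genv D -> lstate -> nspace -> list val -> genv D -> lstate -> nspace -> Prop :=
| bs_lit v G L N : bs_exp (Tup [v]) G L N [v] G L N
| bs_ident x v G L N : L x = Some v -> bs_exp (Var x) G L N [v] G L N
| bs_funcall f args vs G L N Gn Ln ys zs Sb M G'' L' rs :
    bs_args args G L N vs Gn Ln N ->
    N f = Some (ys, zs, Sb) ->
    length vs = length ys -> NoDup (ys ++ zs) ->
    bs Sb Gn (locals_f ys vs zs) N M G'' L' N ->
    Forall2 (fun z r => L' z = Some r) zs rs ->
    bs_exp (FCall f args) G L N rs G'' Ln N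
| bs_opccall op args vs G L N Gn Ln rs G'' :
    bs_args args G L N vs Gn Ln N ->
    opc_step D Gn op vs (inl rs) G'' ->
    bs_exp (OCall op args) G L N rs G'' Ln N
(* arguments are evaluated right to left, each to a single value *)
with bs_args : list term -> genv D -> lstate -> nspace -> list val -> genv D -> lstate -> nspace -> Prop :=
| bs_args_nil G L N : bs_args [] G L N [] G L N
| bs_args_snoc Ms M v vs G L N G1 L1 G2 L2 :
    bs_exp M G L N [v] G1 L1 N -> bs_args Ms G1 L1 N vs G2 L2 N ->
    bs_args (Ms ++ [M]) G L N (vs ++ [v]) G2 L2 N.

Inductive ctx : Type :=
| CHole
| CScoped (E : ctx) (rest : list term) (N : nspace) (L : lstate)
| CLet (xs : list ident) (E : ctx)
| CAssign (xs : list ident) (E : ctx)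
| CExp (E : ectx)
| CCnt (E : ctx)
| CBrk (E : ctx)
| CIf (E : ectx) (body : list term)
| CSwitch (E : ectx) (cases : list (val * list term)) (dflt : list term)
with ectx : Type :=
| EHole
| EFCall (f : ident) (Ms : list term) (E : ectx) (vs : list val)
| EOCall (op : opcode D) (Ms : list term) (E : ectx) (vs : list val)
| EFrame (zs : list ident) (L : lstate) (E : ctx).

Fixpoint plug (E : ctx) (t : term) : term :=
  match E with
  | CHole => t
  | CScoped E' rest N L => Scoped (plug E' t :: rest) N L
  | CLet xs E' => Let xs (plug E' t)
  | CAssign xs E' => Assign xs (plug E' t)
  | CExp E' => eplug E' t
  | CCnt E' => Cnt (plug E' t)
  | CBrk E' => Brk (plug E' t)
  | CIf E' b => If (eplug E' t) b
  | CSwitch E' cs d => Switch (eplug E' t) cs d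
  end
with eplug (E : ectx) (t : term) : term :=
  match E with
  | EHole => t
  | EFCall f Ms E' vs => FCall f (Ms ++ eplug E' t :: map lit vs)
  | EOCall op Ms E' vs => OCall op (Ms ++ eplug E' t :: map lit vs)
  | EFrame zs L E' => Frame zs L (plug E' t)
  end.

Definition config : Type := (term * genv D * lstate * nspace)%type.

Inductive base_step : config -> config -> Prop :=
| ss_block ss G L N :
    ss <> [] -> disjoint N (funs ss) ->
    base_step (Block ss, G, L, N) (Scoped ss N L, G, L, dunion N (funs ss))
| ss_block_empty G L N :
    base_step (Block [], G, L, N) (regular, G, L, N)
| ss_scoped_reg s ss N0 L0 G L1 N1 :
    base_step (Scoped (regular :: s :: ss) N0 L0, G, L1, N1) (Scoped (s :: ss) N0 L0, G, L1, N1)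
| ss_scoped_last N0 L0 G L1 N1 :
    base_step (Scoped [regular] N0 L0, G, L1, N1) (regular, G, restrict L1 L0, N0)
| ss_scoped_irreg m ss N0 L0 G L1 N1 :
    m = MBreak \/ m = MContinue \/ m = MLeave ->
    base_step (Scoped (Mode m :: ss) N0 L0, G, L1, N1) (Mode m, G, restrict L1 L0, N0)
| ss_fundef f ys zs b G L N :
    base_step (FunDef f ys zs b, G, L, N) (regular, G, L, N)
| ss_let xs vs G L N :
    (forall x, In x xs -> L x = None) -> length xs = length vs ->
    base_step (Let xs (Tup vs), G, L, N) (regular, G, upd L xs vs, N)
| ss_assign xs vs G L N :
    (forall x, In x xs -> L x <> None) -> length xs = length vs ->
    base_step (Assign xs (Tup vs), G, L, N) (regular, G, upd L xs vs, N)
| ss_if_false v b G L N :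
    is_false_val D v -> base_step (If (lit v) b, G, L, N) (regular, G, L, N)
| ss_if_true v b G L N :
    is_true_val D v -> base_step (If (lit v) b, G, L, N) (Block b, G, L, N)
| ss_switch_default v cs d G L N :
    ~ In v (map fst cs) ->
    base_step (Switch (lit v) cs d, G, L, N) (Block d, G, L, N)
| ss_switch_case pre ck sk post d G L N :
    ~ In ck (map fst pre) ->
    base_step (Switch (lit ck) (pre ++ (ck, sk) :: post) d, G, L, N) (Block sk, G, L, N)
| ss_for_init i c p b G L N :
    i <> [] ->
    base_step (For i c p b, G, L, N) (Block (i ++ [For [] c p b]), G, L, N)
| ss_for c p b G L N :
    base_step (For [] c p b, G, L, N)
              (Brk (If c [Cnt (Block b); Block p; For [] c p b]), G, L, N)
| ss_cnt_reg G L N : base_step (Cnt regular, G, L, N) (regular, G, L, N)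
| ss_cnt_break G L N : base_step (Cnt (Mode MBreak), G, L, N) (Mode MBreak, G, L, N)
| ss_cnt_leave G L N : base_step (Cnt (Mode MLeave), G, L, N) (Mode MLeave, G, L, N)
| ss_cnt_continue G L N : base_step (Cnt (Mode MContinue), G, L, N) (regular, G, L, N)
| ss_brk_reg G L N : base_step (Brk regular, G, L, N) (regular, G, L, N)
| ss_brk_leave G L N : base_step (Brk (Mode MLeave), G, L, N) (Mode MLeave, G, L, N)
| ss_brk_break G L N : base_step (Brk (Mode MBreak), G, L, N) (regular, G, L, N)
| ss_var x v G L N :
    L x = Some v -> base_step (Var x, G, L, N) (lit v, G, L, N)
| ss_funcall f vs ys zs Sb G L N :
    N f = Some (ys, zs, Sb) -> length vs = length ys -> NoDup (ys ++ zs) ->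
    base_step (FCall f (map lit vs), G, L, N) (Frame zs L Sb, G, locals_f ys vs zs, N)
| ss_frame zs L M G L' N rs :
    (M = regular \/ M = Mode MLeave) ->
    Forall2 (fun z r => L' z = Some r) zs rs ->
    base_step (Frame zs L M, G, L', N) (Tup rs, G, L, N)
| ss_opc_vals op vs G L N rs G' :
    opc_step D G op vs (inl rs) G' ->
    base_step (OCall op (map lit vs), G, L, N) (Tup rs, G', L, N)
| ss_opc_ext op vs G L N e G' :
    opc_step D G op vs (inr e) G' ->
    base_step (OCall op (map lit vs), G, L, N) (Mode (MExt e), G', L, N).

Inductive step : config -> config -> Prop :=
| step_base c c' : base_step c c' -> step c c'
| step_ctx E t G L N t' G' L' N' :
    step (t, G, L, N) (t', G', L', N') ->
    step (plug E t, G, L, N) (plug E t', G', L', N')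
| step_ext E e G L N :
    step (plug E (Mode (MExt e)), G, L, N) (Mode (MExt e), G, L, N).

Inductive steps : config -> config -> Prop :=
| steps_refl c : steps c c
| steps_trans c1 c2 c3 : step c1 c2 -> steps c2 c3 -> steps c1 c3.

End Yul.

(* Soundness goes by mutual induction on big-step derivations: each premise
   is a reduction sequence that is lifted into its evaluation context.
   Completeness reads a reduction sequence to a final term as a derivation
   that reduces the hole of a one-layer context before the layer itself, and
   turns it back into a big-step derivation by strong induction on its height.
   Both directions need two invariants of source programs: function bodies
   never end in break or continue, and blocks and loops never enlarge the
   local state, so the restriction performed on leaving a scope is harmless. *)

From Stdlib Require Import List Lia Wf_nat FunctionalExtensionality.
Import ListNotations.

Scheme bs_mut := Induction for bs Sort Prop
with bs_seq_mut := Induction for bs_seq Sort Prop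
with bs_exp_mut := Induction for bs_exp Sort Prop
with bs_args_mut := Induction for bs_args Sort Prop.

Scheme ctx_mut := Induction for ctx Sort Prop
with ectx_mut := Induction for ectx Sort Prop.

Section Adequacy.
Context {D : dialect}.

Local Notation term := (@term D).
Local Notation lstate := (@lstate D).
Local Notation nspace := (@nspace D).
Local Notation genv := (genv D).
Local Notation val := (val D).
Local Notation ctx := (@ctx D).

(* External modes are not final: they discard the whole evaluation context. *)
Inductive final : term -> Prop :=
| final_tup vs : final (Tup vs)
| final_break : final (Mode MBreak)
| final_continue : final (Mode MContinue)
| final_leave : final (Mode MLeave).

Definition nonfinal (t : term) : Prop := ~ final t.

(* As in [src_stmt], the flag records whether the statement is in a loop body. *)
Inductive outcome : bool -> term -> Prop :=
| outcome_regular lp : outcome lp regular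
| outcome_leave lp : outcome lp (Mode MLeave)
| outcome_break : outcome true (Mode MBreak)
| outcome_continue : outcome true (Mode MContinue).

Lemma final_mode m : m = MBreak \/ m = MContinue \/ m = MLeave -> final (Mode m).
Proof. intros [-> | [-> | ->]]; constructor. Qed.

Lemma outcome_weaken lp M : outcome false M -> outcome lp M.
Proof. inversion 1; constructor. Qed.

Lemma outcome_outside_loop M : outcome false M -> M = regular \/ M = Mode MLeave.
Proof. inversion 1; auto. Qed.

Lemma steps_one c c' : @step D c c' -> steps c c'.
Proof. intro H; econstructor; [exact H | constructor]. Qed.

Lemma steps_base c c' : @base_step D c c' -> steps c c'.
Proof. intro H; apply steps_one; constructor; exact H. Qed.

Lemma steps_comp c1 c2 c3 : @steps D c1 c2 -> steps c2 c3 -> steps c1 c3.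
Proof. induction 1; intros; [assumption | econstructor; eauto]. Qed.

Lemma steps_plug (E : ctx) [t G L N t' G' L' N'] :
  steps (t, G, L, N) (t', G', L', N') -> steps (plug E t, G, L, N) (plug E t', G', L', N').
Proof.
  intro H; remember (t, G, L, N) as c; remember (t', G', L', N') as c'.
  revert t G L N Heqc; induction H as [c | c1 [[[t2 G2] L2] N2] c3 Hstep _ IH];
    intros t G L N ->.
  - injection Heqc'; intros; subst; constructor.
  - econstructor; [apply step_ctx, Hstep | apply IH; auto].
Qed.

Lemma steps_plug_then (E : ctx) [t M M' G L N G1 L1 N1 G2 L2 N2] :
  steps (t, G, L, N) (M, G1, L1, N1) ->
  base_step (plug E M, G1, L1, N1) (M', G2, L2, N2) ->
  steps (plug E t, G, L, N) (M', G2, L2, N2).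
Proof.
  intros Ht Hb; eapply steps_comp; [apply steps_plug, Ht | apply steps_base, Hb].
Qed.

(** * Invariants of big-step evaluation *)

Definition dom_sub (L1 L2 : lstate) : Prop := forall x, L2 x = None -> L1 x = None.

Lemma dom_sub_trans L1 L2 L3 : dom_sub L1 L2 -> dom_sub L2 L3 -> dom_sub L1 L3.
Proof. intros H12 H23 x Hx; auto. Qed.

Lemma restrict_dom_sub L1 L : dom_sub L1 L -> restrict L1 L = L1.
Proof.
  intro H; apply functional_extensionality; intro x; unfold restrict.
  destruct (L x) eqn:Hx; [reflexivity | symmetry; auto].
Qed.

Lemma restrict_self (L : lstate) : restrict L L = L.
Proof. apply restrict_dom_sub; intros x Hx; exact Hx. Qed.

Lemma dunion_none {A : Type} (N : ident D -> option A) : dunion N (fun _ => None) = N.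
Proof. apply functional_extensionality; intro x; unfold dunion; destruct (N x); reflexivity. Qed.

Ltac inv_src H :=
  inversion H; subst;
  try match goal with h : src_expr _ |- _ => solve [inversion h] end.

Lemma src_nspace_dunion lp (N : nspace) ss :
  src_nspace N -> Forall (src_stmt lp) ss -> src_nspace (dunion N (funs ss)).
Proof.
  intros HN Hss f ys zs B; unfold dunion; destruct (N f) eqn:Hf.
  - intro H; injection H; intros ->; exact (HN _ _ _ _ Hf).
  - clear Hf; induction Hss as [|s ss Hs _ IH]; simpl; [discriminate|].
    destruct s; auto.
    destruct (ident_eq_dec D f f0); auto.
    intro H; injection H; intros <- _ _.
    inv_src Hs; eauto.
Qed.

Lemma Forall_case_body {A : Type} (P : A -> Prop) pre (ck : val) sk post :
  Forall P (concat (map snd (pre ++ (ck, sk) :: post))) -> Forall P sk.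
Proof. rewrite map_app, concat_app; simpl; rewrite !Forall_app; tauto. Qed.

Lemma src_for_init_block lp i c p (b : list term) :
  src_stmt lp (For i c p b) -> src_stmt false (Block (i ++ [For [] c p b])).
Proof.
  intro H; inv_src H.
  constructor; apply Forall_app; split; [assumption|].
  repeat constructor; assumption.
Qed.

Lemma bs_nspace {S G L N M G' L' N'} : @bs D S G L N M G' L' N' -> N' = N.
Proof. destruct 1; reflexivity. Qed.

Lemma bs_exp_nspace {e G L N vs G' L' N'} : @bs_exp D e G L N vs G' L' N' -> N' = N.
Proof. destruct 1; reflexivity. Qed.

Lemma bs_exp_locals {e G L N vs G' L' N'} : @bs_exp D e G L N vs G' L' N' -> L' = L.
Proof.
  revert e G L N vs G' L' N'.
  apply (bs_exp_mut D (fun _ _ _ _ _ _ _ _ _ => True) (fun _ _ _ _ _ _ _ _ _ => True)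
           (fun _ _ L _ _ _ L' _ _ => L' = L) (fun _ _ L _ _ _ L' _ _ => L' = L));
    intros; subst; auto.
Qed.

Lemma bs_block_dom_sub {ss G L N M G' L' N'} :
  @bs D (Block ss) G L N M G' L' N' -> dom_sub L' L.
Proof.
  inversion 1; subst; [| match goal with h : bs_exp _ _ _ _ _ _ _ _ |- _ => inversion h end].
  intros x Hx; unfold restrict; rewrite Hx; reflexivity.
Qed.

Lemma bs_loop_dom_sub {c p b G L N M G' L' N'} :
  @bs D (For [] c p b) G L N M G' L' N' -> dom_sub L' L.
Proof.
  intro H; remember (For [] c p b) as S eqn:HS.
  induction H; try discriminate; subst;
    try match goal with h : bs_exp (For _ _ _ _) _ _ _ _ _ _ _ |- _ => inversion h end;
    injection HS; intros; subst;
    repeat match goal with h : bs_exp _ _ _ _ _ _ _ _ |- _ => apply bs_exp_locals in h; subst end;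
    repeat match goal with h : bs (Block _) _ _ _ _ _ _ _ |- _ => apply bs_block_dom_sub in h end;
    eauto using dom_sub_trans.
  intros x Hx; exact Hx.
Qed.

Lemma bs_outcome S G L N M G' L' N' :
  @bs D S G L N M G' L' N' -> forall lp, src_stmt lp S -> outcome lp M.
Proof.
  revert S G L N M G' L' N'.
  apply (bs_mut D (fun S _ _ _ M _ _ _ _ => forall lp, src_stmt lp S -> outcome lp M)
           (fun ss _ _ _ M _ _ _ _ => forall lp, Forall (src_stmt lp) ss -> outcome lp M)
           (fun _ _ _ _ _ _ _ _ _ => True) (fun _ _ _ _ _ _ _ _ _ => True));
    intros; try match goal with h : src_stmt _ _ |- _ => inv_src h end;
    try match goal with h : Forall _ (_ :: _) |- _ => inversion h; subst end;
    try solve [constructor | eauto 6 using Forall_case_body, src_block].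
  - apply outcome_weaken; match goal with IH : forall lp, _ -> outcome lp _ |- _ => apply IH end.
    apply (src_for_init_block lp); constructor; assumption.
  - match goal with h : _ \/ _ |- _ => destruct h as [[-> ->] | [-> ->]] end; constructor.
Qed.

(** * Soundness: from big-step evaluation to reduction sequences *)

Definition loop_unfold (c : term) (p b : list term) : list term :=
  [Cnt (Block b); Block p; For [] c p b].

Lemma funs_loop_unfold c p b : funs (loop_unfold c p b) = fun _ => None.
Proof. reflexivity. Qed.

Definition call (k : ident D + opcode D) (args : list term) : term :=
  match k with inl f => FCall f args | inr op => OCall op args end.

Definition call_ctx (k : ident D + opcode D) (Ms : list term) (ws : list val) : ctx :=
  match k with
  | inl f => CExp (EFCall f Ms EHole ws)
  | inr op => CExp (EOCall op Ms EHole ws)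
  end.

Lemma plug_call_ctx k Ms ws t : plug (call_ctx k Ms ws) t = call k (Ms ++ t :: map lit ws).
Proof. destruct k; reflexivity. Qed.

Lemma steps_loop_cond c p b v G L N G1 :
  steps (c, G, L, N) (lit v, G1, L, N) ->
  steps (For [] c p b, G, L, N) (Brk (If (lit v) (loop_unfold c p b)), G1, L, N).
Proof.
  intro Hc; eapply steps_comp; [apply steps_base, ss_for |].
  apply (steps_plug (CBrk (CIf EHole _))), Hc.
Qed.

Lemma steps_loop_enter c p b v G L N G1 :
  steps (c, G, L, N) (lit v, G1, L, N) -> is_true_val D v ->
  steps (For [] c p b, G, L, N) (Brk (Scoped (loop_unfold c p b) N L), G1, L, N).
Proof.
  intros Hc Hv; eapply steps_comp; [apply (steps_loop_cond _ _ _ _ _ _ _ _ Hc) |].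
  eapply steps_comp; [apply (steps_plug (CBrk CHole)), steps_base, ss_if_true, Hv |].
  pose proof (ss_block (loop_unfold c p b) G1 L N ltac:(discriminate)
                ltac:(intro; right; reflexivity)) as Hb.
  rewrite funs_loop_unfold, dunion_none in Hb.
  apply (steps_plug (CBrk CHole)), steps_base, Hb.
Qed.

Lemma steps_loop_next c p b G L N M' G1 L1 :
  steps (Block b, G, L, N) (M', G1, L1, N) -> M' = regular \/ M' = Mode MContinue ->
  steps (Scoped (loop_unfold c p b) N L, G, L, N) (Scoped [Block p; For [] c p b] N L, G1, L1, N).
Proof.
  intros Hb HM; eapply (steps_plug_then (CScoped CHole _ N L) (t := Cnt (Block b)) (M := regular));
    [| apply ss_scoped_reg].
  apply (steps_plug_then (CCnt CHole) Hb).
  destruct HM as [-> | ->]; constructor.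
Qed.

Lemma steps_for_halt1 c p b v G L N G1 M1 G2 L2 M2 :
  steps (c, G, L, N) (lit v, G1, L, N) -> is_true_val D v ->
  steps (Block b, G1, L, N) (M1, G2, L2, N) -> dom_sub L2 L ->
  (M1 = Mode MLeave /\ M2 = Mode MLeave \/ M1 = Mode MBreak /\ M2 = regular) ->
  steps (For [] c p b, G, L, N) (M2, G2, L2, N).
Proof.
  intros Hc Hv Hb Hdom HM.
  eapply steps_comp; [apply (steps_loop_enter _ _ _ _ _ _ _ _ Hc Hv) |].
  rewrite <- (restrict_dom_sub _ _ Hdom).
  destruct HM as [[-> ->] | [-> ->]];
    (eapply (steps_plug_then (CBrk CHole) (t := Scoped (loop_unfold c p b) N L) (M := Mode _));
       [| constructor]);
    (eapply (steps_plug_then (CScoped CHole _ N L) (t := Cnt (Block b)) (M := Mode _));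
       [| apply ss_scoped_irreg; auto]);
    apply (steps_plug_then (CCnt CHole) Hb); constructor.
Qed.

Lemma steps_for_halt2 c p b v G L N G1 M' G2 L2 G3 L3 :
  steps (c, G, L, N) (lit v, G1, L, N) -> is_true_val D v ->
  steps (Block b, G1, L, N) (M', G2, L2, N) -> M' = regular \/ M' = Mode MContinue ->
  steps (Block p, G2, L2, N) (Mode MLeave, G3, L3, N) -> dom_sub L3 L ->
  steps (For [] c p b, G, L, N) (Mode MLeave, G3, L3, N).
Proof.
  intros Hc Hv Hb HM Hp Hdom.
  eapply steps_comp; [apply (steps_loop_enter _ _ _ _ _ _ _ _ Hc Hv) |].
  rewrite <- (restrict_dom_sub _ _ Hdom).
  eapply (steps_plug_then (CBrk CHole) (t := Scoped (loop_unfold c p b) N L) (M := Mode MLeave));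
    [| constructor].
  eapply steps_comp; [apply (steps_loop_next _ _ _ _ _ _ _ _ _ Hb HM) |].
  apply (steps_plug_then (CScoped CHole _ N L) Hp).
  apply ss_scoped_irreg; auto.
Qed.

Lemma steps_for_loop c p b v G L N G1 M' G2 L2 G3 L3 M G4 L4 :
  steps (c, G, L, N) (lit v, G1, L, N) -> is_true_val D v ->
  steps (Block b, G1, L, N) (M', G2, L2, N) -> M' = regular \/ M' = Mode MContinue ->
  steps (Block p, G2, L2, N) (regular, G3, L3, N) ->
  steps (For [] c p b, G3, L3, N) (M, G4, L4, N) -> M = regular \/ M = Mode MLeave ->
  dom_sub L4 L ->
  steps (For [] c p b, G, L, N) (M, G4, L4, N).
Proof.
  intros Hc Hv Hb HM' Hp Hf HM Hdom.
  eapply steps_comp; [apply (steps_loop_enter _ _ _ _ _ _ _ _ Hc Hv) |].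
  rewrite <- (restrict_dom_sub _ _ Hdom).
  eapply (steps_plug_then (CBrk CHole) (t := Scoped (loop_unfold c p b) N L) (M := M));
    [| destruct HM as [-> | ->]; constructor].
  eapply steps_comp; [apply (steps_loop_next _ _ _ _ _ _ _ _ _ Hb HM') |].
  eapply steps_comp;
    [eapply (steps_plug_then (CScoped CHole _ N L) Hp); apply ss_scoped_reg |].
  apply (steps_plug_then (CScoped CHole _ N L) Hf).
  destruct HM as [-> | ->]; constructor; auto.
Qed.

Lemma bs_steps S G L N M G' L' N' :
  @bs D S G L N M G' L' N' -> forall lp, src_stmt lp S -> src_nspace N ->
  steps (S, G, L, N) (M, G', L', N').
Proof.
  revert S G L N M G' L' N'.
  apply (bs_mut D
    (fun S G L N M G' L' N' _ => forall lp, src_stmt lp S -> src_nspace N ->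
       steps (S, G, L, N) (M, G', L', N'))
    (fun ss G L N M G' L' N' _ => forall lp, Forall (src_stmt lp) ss -> src_nspace N ->
       ss <> [] -> forall N0 L0,
       steps (Scoped ss N0 L0, G, L, N) (M, G', restrict L' L0, N0))
    (fun e G L N vs G' L' N' _ => src_nspace N -> steps (e, G, L, N) (Tup vs, G', L', N'))
    (fun args G L N vs G' L' N' _ => src_nspace N -> forall k ws,
       steps (call k (args ++ map lit ws), G, L, N) (call k (map lit (vs ++ ws)), G', L', N'))).
  - intros ss G L N M G1 L1 Hdis Hss IH lp Hs HN; inv_src Hs.
    destruct ss as [| s ss].
    + inversion Hss; subst; rewrite restrict_self; apply steps_base; constructor.
    + eapply steps_comp; [apply steps_base; constructor; [discriminate | exact Hdis] |].
      eapply IH; eauto using src_nspace_dunion; discriminate.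
  - intros; constructor.
  - intros; apply steps_base; constructor.
  - intros xs e vs G L N G1 L1 He IH Hxs Hlen lp Hs HN.
    rewrite (bs_exp_locals He) in *.
    apply (steps_plug_then (CLet xs CHole) (IH HN)); constructor; auto.
  - intros xs e vs G L N G1 L1 He IH Hxs Hlen lp Hs HN.
    rewrite (bs_exp_locals He) in *.
    apply (steps_plug_then (CAssign xs CHole) (IH HN)); constructor; auto.
  - intros e G L N G1 L1 He IH lp Hs HN; exact (IH HN).
  - intros c b v G L N G0 L0 Hc IH Hv lp Hs HN.
    apply (steps_plug_then (CIf EHole b) (IH HN)); constructor; auto.
  - intros c b v G L N G0 L0 M G1 L1 Hc IH Hv Hb IHb lp Hs HN; inv_src Hs.
    eapply steps_comp; [eapply (steps_plug_then (CIf EHole b) (IH HN)) |].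
    + apply ss_if_true, Hv.
    + apply (IHb lp); [constructor |]; assumption.
  - intros c cs d v G L N G0 L0 M G1 L1 Hc IH Hv Hd IHd lp Hs HN; inv_src Hs.
    eapply steps_comp; [eapply (steps_plug_then (CSwitch EHole cs d) (IH HN)) |].
    + apply ss_switch_default, Hv.
    + apply (IHd lp); [constructor |]; assumption.
  - intros c pre ck sk post d G L N G0 L0 M G1 L1 Hc IH Hck Hk IHk lp Hs HN; inv_src Hs.
    eapply steps_comp; [eapply (steps_plug_then (CSwitch EHole _ d) (IH HN)) |].
    + apply ss_switch_case, Hck.
    + apply (IHk lp); [constructor; eapply Forall_case_body; eassumption | assumption].
  - intros i c p b G L N M G1 L1 Hi Hb IHb lp Hs HN.
    eapply steps_comp; [apply steps_base, ss_for_init, Hi |].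
    apply (IHb false); [eapply src_for_init_block; eassumption | assumption].
  - intros c p b v G L N G1 L1 Hc IH Hv lp Hs HN.
    rewrite (bs_exp_locals Hc) in *.
    eapply steps_comp; [apply steps_loop_cond, IH, HN |].
    eapply (steps_plug_then (CBrk CHole)); [apply steps_base, ss_if_false, Hv | apply ss_brk_reg].
  - intros c p b v G L N G1 L1 M1 G2 L2 M2 Hc IH Hv Hb IHb HM lp Hs HN; inv_src Hs.
    rewrite (bs_exp_locals Hc) in *.
    apply (steps_for_halt1 c p b v G L N G1 M1 G2 L2 M2 (IH HN) Hv); auto.
    + apply (IHb true); [constructor |]; assumption.
    + exact (bs_block_dom_sub Hb).
  - intros c p b v G L N G1 L1 M' G2 L2 G3 L3 Hc IH Hv Hb IHb HM Hp IHp lp Hs HN; inv_src Hs.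
    rewrite (bs_exp_locals Hc) in *.
    apply (steps_for_halt2 c p b v G L N G1 M' G2 L2 G3 L3 (IH HN) Hv); auto.
    + apply (IHb true); [constructor |]; assumption.
    + apply (IHp false); [constructor |]; assumption.
    + eapply dom_sub_trans; [apply (bs_block_dom_sub Hp) |].
      exact (bs_block_dom_sub Hb).
  - intros c p b v G L N G1 L1 M' G2 L2 G3 L3 M G4 L4 Hc IH Hv Hb IHb HM Hp IHp Hf IHf
      lp Hs HN; inv_src Hs.
    rewrite (bs_exp_locals Hc) in *.
    apply (steps_for_loop c p b v G L N G1 M' G2 L2 G3 L3 M G4 L4 (IH HN) Hv); auto.
    + apply (IHb true); [constructor |]; assumption.
    + apply (IHp false); [constructor |]; assumption.
    + apply (IHf false); [constructor |]; assumption.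
    + apply outcome_outside_loop; eapply bs_outcome; [exact Hf | constructor; assumption].
    + eapply dom_sub_trans; [apply (bs_loop_dom_sub Hf) |].
      eapply dom_sub_trans; [apply (bs_block_dom_sub Hp) |].
      exact (bs_block_dom_sub Hb).
  - intros G L N lp _ _ Hne; congruence.
  - intros s ss G L N G1 L1 M G2 L2 Hs IHs Hss IHss lp Hsrc HN _ N0 L0.
    apply Forall_cons_iff in Hsrc as [Hs_src Hss_src].
    destruct ss as [| s' ss].
    + inversion Hss; subst.
      apply (steps_plug_then (CScoped CHole [] N0 L0) (IHs lp Hs_src HN)).
      constructor.
    + eapply steps_comp.
      * eapply (steps_plug_then (CScoped CHole _ N0 L0) (IHs lp Hs_src HN)).
        constructor.
      * apply (IHss lp); auto; discriminate.
  - intros s ss G L N m G1 L1 Hm Hs IHs lp Hsrc HN _ N0 L0.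
    apply Forall_cons_iff in Hsrc as [Hs_src _].
    apply (steps_plug_then (CScoped CHole _ N0 L0) (IHs lp Hs_src HN)).
    constructor; exact Hm.
  - intros; constructor.
  - intros; apply steps_base; constructor; assumption.
  - intros f args vs G L N Gn Ln ys zs Sb M G'' L' rs Hargs IHargs Hf Hlen Hnd Hb IHb Hrs HN.
    destruct (HN _ _ _ _ Hf) as [b [-> Hsb]].
    pose proof (IHargs HN (inl f) []) as Hcall; rewrite !app_nil_r in Hcall.
    eapply steps_comp; [exact Hcall |].
    eapply steps_comp; [apply steps_base; apply ss_funcall; eassumption |].
    apply (steps_plug_then (CExp (EFrame zs Ln CHole))
             (IHb false (src_block _ _ Hsb) HN)).
    constructor; [| exact Hrs].
    apply outcome_outside_loop; eapply bs_outcome; [exact Hb | constructor; exact Hsb].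
  - intros op args vs G L N Gn Ln rs G'' Hargs IHargs Hop HN.
    pose proof (IHargs HN (inr op) []) as Hcall; rewrite !app_nil_r in Hcall.
    eapply steps_comp; [exact Hcall |].
    apply steps_base; constructor; exact Hop.
  - intros; constructor.
  - intros Ms M v vs G L N G1 L1 G2 L2 HM IHM HMs IHMs HN k ws.
    rewrite <- !app_assoc; simpl.
    eapply steps_comp; [| apply (IHMs HN k (v :: ws))].
    pose proof (steps_plug (call_ctx k Ms ws) (IHM HN)) as Harg.
    rewrite !plug_call_ctx in Harg; exact Harg.
Qed.

(** * Evaluation contexts, one layer at a time *)

Inductive layer : Type :=
| KScoped (rest : list term) (N : nspace) (L : lstate)
| KLet (xs : list (ident D))
| KAssign (xs : list (ident D))
| KCnt
| KBrk
| KIf (b : list term)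
| KSwitch (cs : list (val * list term)) (d : list term)
| KCall (k : ident D + opcode D) (Ms : list term) (vs : list val)
| KFrame (zs : list (ident D)) (L : lstate).

Definition plug1 (K : layer) (t : term) : term :=
  match K with
  | KScoped rest N L => Scoped (t :: rest) N L
  | KLet xs => Let xs t
  | KAssign xs => Assign xs t
  | KCnt => Cnt t
  | KBrk => Brk t
  | KIf b => If t b
  | KSwitch cs d => Switch t cs d
  | KCall k Ms vs => call k (Ms ++ t :: map lit vs)
  | KFrame zs L => Frame zs L t
  end.

Fixpoint ctx_layers (E : ctx) : list layer :=
  match E with
  | CHole => []
  | CScoped E rest N L => KScoped rest N L :: ctx_layers E
  | CLet xs E => KLet xs :: ctx_layers E
  | CAssign xs E => KAssign xs :: ctx_layers E
  | CExp E => ectx_layers E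
  | CCnt E => KCnt :: ctx_layers E
  | CBrk E => KBrk :: ctx_layers E
  | CIf E b => KIf b :: ectx_layers E
  | CSwitch E cs d => KSwitch cs d :: ectx_layers E
  end
with ectx_layers (E : @ectx D) : list layer :=
  match E with
  | EHole => []
  | EFCall f Ms E vs => KCall (inl f) Ms vs :: ectx_layers E
  | EOCall op Ms E vs => KCall (inr op) Ms vs :: ectx_layers E
  | EFrame zs L E => KFrame zs L :: ctx_layers E
  end.

Lemma plug_layers E t : plug E t = fold_right plug1 t (ctx_layers E).
Proof.
  apply (ctx_mut D (fun E => plug E t = fold_right plug1 t (ctx_layers E))
                   (fun E => eplug E t = fold_right plug1 t (ectx_layers E)));
    intros; simpl; congruence.
Qed.

Lemma final_or_nonfinal t : final t \/ nonfinal t.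
Proof.
  destruct t; try solve [left; constructor | right; inversion 1].
  destruct m; try solve [left; constructor | right; inversion 1].
Qed.

Lemma plug1_nonfinal K t : nonfinal (plug1 K t).
Proof. destruct K as [| | | | | | | [f | op] Ms vs |]; inversion 1. Qed.

Lemma in_map_lit_final t (vs : list val) : In t (map lit vs) -> final t.
Proof. rewrite in_map_iff; intros [v [<- _]]; constructor. Qed.

Lemma map_lit_inj (vs ws : list val) : map lit vs = map lit ws -> vs = ws.
Proof.
  revert ws; induction vs; intros [| w ws] H; inversion H; f_equal; auto.
Qed.

(* Everything to the right of the hole is a value, so a nonfinal [t'] fixes the split. *)
Lemma app_lits_cases {Ms t ws Ms' t' ws'} :
  Ms ++ t :: map lit ws = Ms' ++ t' :: map lit ws' -> nonfinal t' ->
  (Ms = Ms' /\ t = t' /\ ws = ws') \/ exists v, t = lit v.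
Proof.
  revert Ms'; induction Ms as [| M Ms IH]; intros [| M' Ms'] E Ht'; simpl in E;
    injection E as Ehd Etl.
  - left; subst; auto using map_lit_inj.
  - exfalso; apply Ht', (in_map_lit_final _ ws).
    rewrite Etl; apply in_or_app; right; left; reflexivity.
  - right; assert (Hin : In t (map lit ws'))
      by (rewrite <- Etl; apply in_or_app; right; left; reflexivity).
    apply in_map_iff in Hin as [v [<- _]]; eauto.
  - subst; destruct (IH Ms' Etl Ht') as [[-> [-> ->]] | Hv]; auto.
Qed.

Lemma plug1_inj {K K' t t'} :
  plug1 K t = plug1 K' t' -> nonfinal t -> nonfinal t' -> K = K' /\ t = t'.
Proof.
  intros E Ht Ht'; destruct K, K'; try destruct k; try destruct k0;
    simpl in E; inversion E; subst; auto.
  all: match goal with e : _ ++ _ :: map lit _ = _ |- _ =>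
         destruct (app_lits_cases e Ht') as [[-> [-> ->]] | [v ->]];
           [auto | exfalso; apply Ht; constructor]
       end.
Qed.

Lemma final_no_base_step t G L N c : final t -> ~ @base_step D (t, G, L, N) c.
Proof. destruct 1; inversion 1. Qed.

Lemma base_step_plug1_hole K t G L N c : @base_step D (plug1 K t, G, L, N) c -> final t.
Proof.
  destruct K as [| | | | | | | [f | op] Ms ws |]; simpl; inversion 1; subst;
    try solve [constructor | apply final_mode; assumption
              | match goal with h : _ \/ _ |- _ => destruct h as [-> | ->]; constructor end].
  all: apply (in_map_lit_final _ vs);
    match goal with e : map lit _ = _ |- _ => rewrite e end;
    apply in_or_app; right; left; reflexivity.
Qed.

(** * Reductions to a final term, as derivations *)

(* [runs n t G L N r G' L' N']: [t] reduces to the final term [r], by a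
   derivation of height at most [n] that reduces a nonfinal hole of a single
   context layer before the layer itself.  The height is the measure for the
   proof of completeness. *)
Inductive runs :
  nat -> term -> genv -> lstate -> nspace -> term -> genv -> lstate -> nspace -> Prop :=
| runs_final n t G L N : final t -> runs n t G L N t G L N
| runs_base n t G L N t1 G1 L1 N1 r G' L' N' :
    base_step (t, G, L, N) (t1, G1, L1, N1) -> runs n t1 G1 L1 N1 r G' L' N' ->
    runs (S n) t G L N r G' L' N'
| runs_plug1 n K h G L N r1 G1 L1 N1 r G' L' N' :
    nonfinal h -> runs n h G L N r1 G1 L1 N1 -> runs n (plug1 K r1) G1 L1 N1 r G' L' N' ->
    runs (S n) (plug1 K h) G L N r G' L' N'.

Lemma runs_mono n t G L N r G' L' N' :
  runs n t G L N r G' L' N' -> forall m, n <= m -> runs m t G L N r G' L' N'.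
Proof.
  induction 1; intros [| m] Hm; try lia; [constructor; assumption | constructor; assumption | |].
  - eapply runs_base; eauto with arith.
  - eapply runs_plug1; eauto with arith.
Qed.

Lemma runs_result_final {n t G L N r G' L' N'} : runs n t G L N r G' L' N' -> final r.
Proof. induction 1; assumption. Qed.

Lemma runs_final_inv {n t G L N r G' L' N'} :
  final t -> runs n t G L N r G' L' N' -> r = t /\ G' = G /\ L' = L /\ N' = N.
Proof.
  intros Ht; destruct 1; auto.
  - exfalso; eapply final_no_base_step; eassumption.
  - exfalso; eapply plug1_nonfinal; eassumption.
Qed.

Lemma runs_ext_false n e G L N r G' L' N' : ~ runs n (Mode (MExt e)) G L N r G' L' N'.
Proof.
  intro H; remember (Mode (MExt e)) as t eqn:Ht; destruct H; subst;
    [inversion H | inversion H | destruct K as [| | | | | | | [f | op] Ms vs |]; discriminate].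
Qed.

Lemma runs_plug1_back K t t' G L N G1 L1 N1 : nonfinal t ->
  (forall n r G' L' N', runs n t' G1 L1 N1 r G' L' N' -> exists m, runs m t G L N r G' L' N') ->
  forall n r G' L' N', runs n (plug1 K t') G1 L1 N1 r G' L' N' ->
  exists m, runs m (plug1 K t) G L N r G' L' N'.
Proof.
  intros Ht Hback n r G' L' N' H.
  destruct (final_or_nonfinal t') as [Ht' | Ht'].
  - destruct (Hback 0 t' G1 L1 N1 (runs_final 0 t' G1 L1 N1 Ht')) as [m Hm].
    exists (S (max m n)); eapply runs_plug1; eauto; eapply runs_mono; eauto; lia.
  - remember (plug1 K t') as u eqn:Hu;
      destruct H as [| | n K' h ? ? ? r1 G2 L2 N2 ? ? ? ? Hh Hh_runs Hrest]; subst.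
    + exfalso; eapply plug1_nonfinal; eassumption.
    + exfalso; eapply Ht', base_step_plug1_hole; eassumption.
    + destruct (plug1_inj Hu Hh Ht') as [-> ->].
      destruct (Hback _ _ _ _ _ Hh_runs) as [m Hm].
      exists (S (max m n)); eapply runs_plug1; eauto; eapply runs_mono; eauto; lia.
Qed.

Lemma step_nonfinal {c c'} : @step D c c' -> nonfinal (fst (fst (fst c))).
Proof.
  induction 1 as [[[[t G] L] N] c' Hb | E t G L N t' G' L' N' _ IH | E e G L N];
    simpl; rewrite ?plug_layers.
  - intro Hf; eapply final_no_base_step; eassumption.
  - destruct (ctx_layers E); simpl; [exact IH | apply plug1_nonfinal].
  - destruct (ctx_layers E); simpl; [inversion 1 | apply plug1_nonfinal].
Qed.

Lemma runs_step_back t G L N t' G1 L1 N1 :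
  @step D (t, G, L, N) (t', G1, L1, N1) ->
  forall n r G' L' N', runs n t' G1 L1 N1 r G' L' N' -> exists m, runs m t G L N r G' L' N'.
Proof.
  intro H; remember (t, G, L, N) as c; remember (t', G1, L1, N1) as c'.
  revert t G L N t' G1 L1 N1 Heqc Heqc'.
  induction H as [c c' Hb | E u G0 L0 N0 u' G0' L0' N0' Hs IH | E e G0 L0 N0];
    intros t G L N t' G1 L1 N1 Hc Hc'; subst; intros n r G' L' N' Hr.
  - exists (S n); eapply runs_base; eassumption.
  - injection Hc; injection Hc'; intros; subst; clear Hc Hc'.
    rewrite !plug_layers in *.
    pose proof (step_nonfinal Hs) as Hu; simpl in Hu.
    revert n r G' L' N' Hr; induction (ctx_layers E) as [| K Ks IHKs]; simpl.
    + eapply IH; reflexivity.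
    + apply runs_plug1_back; [| exact IHKs].
      destruct Ks; [exact Hu | apply plug1_nonfinal].
  - injection Hc'; intros; subst; exfalso; eapply runs_ext_false; eassumption.
Qed.

Lemma steps_runs t G L N r G' L' N' :
  @steps D (t, G, L, N) (r, G', L', N') -> final r -> exists n, runs n t G L N r G' L' N'.
Proof.
  intro H; remember (t, G, L, N) as c; remember (r, G', L', N') as c'.
  revert t G L N Heqc; induction H as [c | c1 [[[t2 G2] L2] N2] c3 Hs _ IH];
    intros t G L N -> Hr; subst.
  - injection Heqc'; intros; subst; exists 0; constructor; assumption.
  - destruct (IH eq_refl t2 G2 L2 N2 eq_refl Hr) as [n Hn].
    eapply runs_step_back; eassumption.
Qed.

(* In every layer but a call, the hole is the only position under evaluation,
   so [plug1 K t] determines [K] and [t] even for final [t]. *)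
Definition strict_layer (K : layer) : Prop :=
  match K with KCall _ _ _ => False | _ => True end.

Lemma plug1_strict_inj {K K' t t'} :
  strict_layer K -> plug1 K' t' = plug1 K t -> K' = K /\ t' = t.
Proof.
  intros HK E; destruct K, K' as [| | | | | | | [f | op] Ms' vs' |];
    simpl in *; inversion E; subst; tauto.
Qed.

Ltac not_plug1 :=
  let K := fresh "K" in
  intros K ? ? ?; destruct K as [| | | | | | | [? | ?] ? ? |]; discriminate.

Lemma runs_plug1_inv {n K h G L N r G' L' N'} :
  nonfinal h -> runs n (plug1 K h) G L N r G' L' N' ->
  exists m r1 G1 L1 N1, m < n /\ runs m h G L N r1 G1 L1 N1 /\
    runs m (plug1 K r1) G1 L1 N1 r G' L' N'.
Proof.
  intros Hh H; remember (plug1 K h) as u eqn:Hu;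
    destruct H as [| | n K' h' ? ? ? r1 G1 L1 N1 ? ? ? ? Hh' Hh_runs Hrest]; subst.
  - exfalso; eapply plug1_nonfinal; eassumption.
  - exfalso; eapply Hh, base_step_plug1_hole; eassumption.
  - destruct (plug1_inj Hu Hh' Hh) as [-> ->].
    exists n, r1, G1, L1, N1; auto.
Qed.

Lemma runs_redex_inv n t G L N r G' L' N' :
  nonfinal t -> (forall K h, nonfinal h -> t <> plug1 K h) -> runs n t G L N r G' L' N' ->
  exists m t1 G1 L1 N1, m < n /\ base_step (t, G, L, N) (t1, G1, L1, N1) /\
    runs m t1 G1 L1 N1 r G' L' N'.
Proof.
  intros Ht Hnl; destruct 1 as [| n t G L N t1 G1 L1 N1 | n K h].
  - contradiction.
  - exists n, t1, G1, L1, N1; auto.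
  - exfalso; eapply Hnl; [eassumption | reflexivity].
Qed.

Lemma runs_layer_inv n K h G L N r G' L' N' :
  strict_layer K -> runs n (plug1 K h) G L N r G' L' N' ->
  exists m r1 G1 L1 N1 t2 G2 L2 N2, m < n /\ runs m h G L N r1 G1 L1 N1 /\
    base_step (plug1 K r1, G1, L1, N1) (t2, G2, L2, N2) /\ runs m t2 G2 L2 N2 r G' L' N'.
Proof.
  intros HK.
  assert (Hstep : forall n x G L N r G' L' N', final x -> runs n (plug1 K x) G L N r G' L' N' ->
            exists m t2 G2 L2 N2, m < n /\ base_step (plug1 K x, G, L, N) (t2, G2, L2, N2) /\
              runs m t2 G2 L2 N2 r G' L' N').
  { clear - HK; intros n x G L N r G' L' N' Hx H; remember (plug1 K x) as u eqn:Hu;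
      destruct H as [| n u G L N t2 G2 L2 N2 | n K' h]; subst.
    - exfalso; eapply plug1_nonfinal; eassumption.
    - exists n, t2, G2, L2, N2; auto.
    - destruct (plug1_strict_inj HK Hu) as [_ ->]; contradiction. }
  intro H; destruct (final_or_nonfinal h) as [Hh | Hh].
  - destruct (Hstep _ _ _ _ _ _ _ _ _ Hh H) as (m & t2 & G2 & L2 & N2 & Hm & Hb & Hr).
    exists m, h, G, L, N, t2, G2, L2, N2; repeat split; auto.
    apply (runs_mono 0); [constructor; exact Hh | lia].
  - destruct (runs_plug1_inv Hh H) as (m & r1 & G1 & L1 & N1 & Hm & H1 & H2).
    destruct (Hstep _ _ _ _ _ _ _ _ _ (runs_result_final H1) H2)
      as (m' & t2 & G2 & L2 & N2 & Hm' & Hb & Hr).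
    exists m, r1, G1, L1, N1, t2, G2, L2, N2; repeat split; auto.
    apply (runs_mono m'); [exact Hr | lia].
Qed.

Lemma runs_catch_inv n K h G L N r G' L' N' :
  K = KCnt \/ K = KBrk -> runs n (plug1 K h) G L N r G' L' N' ->
  exists m r1, m < n /\ runs m h G L N r1 G' L' N' /\
    base_step (plug1 K r1, G', L', N') (r, G', L', N').
Proof.
  intros HK H.
  destruct (runs_layer_inv n K h G L N r G' L' N') as
    (m & r1 & G1 & L1 & N1 & t2 & G2 & L2 & N2 & Hm & H1 & Hb & H2);
    [destruct HK as [-> | ->]; exact I | exact H |].
  assert (Ht2 : final t2) by (destruct HK as [-> | ->]; inversion Hb; constructor).
  destruct (runs_final_inv Ht2 H2) as (-> & -> & -> & ->).
  assert (G1 = G2 /\ L1 = L2 /\ N1 = N2) as (-> & -> & ->)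
    by (destruct HK as [-> | ->]; inversion Hb; auto).
  exists m, r1; auto.
Qed.

Lemma runs_block_inv {n ss G L N r G' L' N'} :
  runs n (Block ss) G L N r G' L' N' ->
  (ss = [] /\ r = regular /\ G' = G /\ L' = L /\ N' = N) \/
  (ss <> [] /\ disjoint N (funs ss) /\
   exists m, m < n /\ runs m (Scoped ss N L) G L (dunion N (funs ss)) r G' L' N').
Proof.
  intro H; destruct (runs_redex_inv n (Block ss) G L N r G' L' N')
    as (m & t1 & G1 & L1 & N1 & Hm & Hb & Hr); [inversion 1 | not_plug1 | exact H |].
  inversion Hb; subst.
  - right; eauto.
  - left; destruct (runs_final_inv ltac:(constructor) Hr) as (-> & -> & -> & ->).
    auto.
Qed.

(* How a scoped block [Scoped (h :: rest) N0 L0] finishes, once its head [h]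
   has finished with [r1] at [G1, L1, N1]. *)
Inductive scoped_after (n : nat) (N0 : nspace) (L0 : lstate) :
  list term -> term -> genv -> lstate -> nspace -> term -> genv -> lstate -> nspace -> Prop :=
| scoped_after_cons rest m G L N r G' L' N' :
    rest <> [] -> m < n -> runs m (Scoped rest N0 L0) G L N r G' L' N' ->
    scoped_after n N0 L0 rest regular G L N r G' L' N'
| scoped_after_last G L N :
    scoped_after n N0 L0 [] regular G L N regular G (restrict L L0) N0
| scoped_after_abrupt rest md G L N :
    md = MBreak \/ md = MContinue \/ md = MLeave ->
    scoped_after n N0 L0 rest (Mode md) G L N (Mode md) G (restrict L L0) N0.

Lemma runs_scoped_inv {n h rest N0 L0 G L N r G' L' N'} :
  runs n (Scoped (h :: rest) N0 L0) G L N r G' L' N' ->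
  exists m r1 G1 L1 N1, m < n /\ runs m h G L N r1 G1 L1 N1 /\
    scoped_after n N0 L0 rest r1 G1 L1 N1 r G' L' N'.
Proof.
  intro H.
  destruct (runs_layer_inv n (KScoped rest N0 L0) h G L N r G' L' N' I H)
    as (m & r1 & G1 & L1 & N1 & t2 & G2 & L2 & N2 & Hm & H1 & Hb & H2).
  exists m, r1, G1, L1, N1; repeat split; auto.
  inversion Hb; subst.
  - apply (scoped_after_cons n N0 L0 (_ :: _) m); auto; discriminate.
  - destruct (runs_final_inv ltac:(constructor) H2) as (-> & -> & -> & ->).
    constructor.
  - match goal with hm : _ \/ _ |- _ =>
      destruct (runs_final_inv (final_mode _ hm) H2) as (-> & -> & -> & ->)
    end.
    constructor; assumption.
Qed.

Lemma runs_frame_inv {n zs L0 h G L N r G' L' N'} :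
  runs n (Frame zs L0 h) G L N r G' L' N' ->
  exists m r1 L1 rs, m < n /\ runs m h G L N r1 G' L1 N' /\ (r1 = regular \/ r1 = Mode MLeave) /\
    Forall2 (fun z v => L1 z = Some v) zs rs /\ r = Tup rs /\ L' = L0.
Proof.
  intro H.
  destruct (runs_layer_inv n (KFrame zs L0) h G L N r G' L' N' I H)
    as (m & r1 & G1 & L1 & N1 & t2 & G2 & L2 & N2 & Hm & H1 & Hb & H2).
  inversion Hb; subst.
  destruct (runs_final_inv ltac:(constructor) H2) as (-> & -> & -> & ->).
  exists m, r1, L1, rs; repeat split; auto.
Qed.

Lemma runs_call_values_inv {n k vs G L N r G' L' N'} :
  runs n (call k (map lit vs)) G L N r G' L' N' ->
  exists m t1 G1 L1 N1, m < n /\ base_step (call k (map lit vs), G, L, N) (t1, G1, L1, N1) /\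
    runs m t1 G1 L1 N1 r G' L' N'.
Proof.
  apply runs_redex_inv; [destruct k; inversion 1 |].
  intros K h Hh E; destruct K as [| | | | | | | k' Ms ws |]; try (destruct k; discriminate).
  apply Hh, (in_map_lit_final _ vs).
  destruct k, k'; simpl in E; try discriminate; injection E; intros ->;
    try intros _; apply in_or_app; right; left; reflexivity.
Qed.

Lemma runs_call_hole_lit {n k Ms x ws G L N r G' L' N'} :
  final x -> runs n (call k (Ms ++ x :: map lit ws)) G L N r G' L' N' -> exists v, x = lit v.
Proof.
  intros Hx H; remember (call k (Ms ++ x :: map lit ws)) as u eqn:Hu;
    destruct H as [| n u G L N t1 G1 L1 N1 | n K h G L N r1 G1 L1 N1 r G' L' N' Hh]; subst.
  - destruct k; inversion H.
  - destruct k; inversion H; subst;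
      match goal with e : map lit ?vs = _ |- _ =>
        assert (Hin : In x (map lit vs)) by (rewrite e; apply in_or_app; right; left; reflexivity)
      end;
      apply in_map_iff in Hin as [v [<- _]]; eauto.
  - destruct K as [| | | | | | | k' Ms' ws' |]; try (destruct k; discriminate).
    destruct k, k'; simpl in Hu; try discriminate; injection Hu; intros E; try intros _;
      destruct (app_lits_cases (eq_sym E) Hh) as [[_ [-> _]] | Hv]; auto; contradiction.
Qed.

Lemma scoped_after_outcome n N0 L0 rest r1 G1 L1 N1 r G' L' N' :
  scoped_after n N0 L0 rest r1 G1 L1 N1 r G' L' N' -> outcome true r1.
Proof. destruct 1 as [| | ? md ? ? ? [-> | [-> | ->]]]; constructor. Qed.

(** * Completeness: from reductions to big-step evaluation *)

Definition exp_complete (n : nat) : Prop :=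
  forall e G L N r G' L' N', src_expr e -> src_nspace N -> runs n e G L N r G' L' N' ->
  exists vs, r = Tup vs /\ bs_exp e G L N vs G' L' N'.

Definition stmt_complete (n : nat) : Prop :=
  forall lp S G L N r G' L' N', src_stmt lp S -> src_nspace N -> outcome true r ->
  runs n S G L N r G' L' N' -> bs S G L N r G' L' N'.

Section CompletenessStep.

Variable n : nat.
Hypothesis IH : forall m, m < n -> exp_complete m /\ stmt_complete m.

Lemma runs_exp_inv m e G L N r G' L' N' : m < n -> src_expr e -> src_nspace N ->
  runs m e G L N r G' L' N' ->
  exists vs, r = Tup vs /\ L' = L /\ N' = N /\ bs_exp e G L N vs G' L N.
Proof.
  intros Hm He HN H; destruct (proj1 (IH m Hm) _ _ _ _ _ _ _ _ He HN H) as [vs [-> Hbs]].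
  pose proof (bs_exp_locals Hbs) as ->.
  pose proof (bs_exp_nspace Hbs) as ->; eauto.
Qed.

Lemma runs_stmt_inv m lp S G L N r G' L' N' : m < n -> src_stmt lp S -> src_nspace N ->
  outcome true r -> runs m S G L N r G' L' N' -> bs S G L N r G' L' N /\ N' = N.
Proof.
  intros Hm HS HN Hr H; pose proof (proj2 (IH m Hm) _ _ _ _ _ _ _ _ _ HS HN Hr H) as Hbs.
  pose proof (bs_nspace Hbs) as ->; auto.
Qed.

Lemma runs_hole_exp_inv m K e G L N r G' L' N' :
  m <= n -> strict_layer K -> src_expr e -> src_nspace N ->
  runs m (plug1 K e) G L N r G' L' N' ->
  exists vs G1 m' t2 G2 L2 N2, m' < m /\ bs_exp e G L N vs G1 L N /\
    base_step (plug1 K (Tup vs), G1, L, N) (t2, G2, L2, N2) /\ runs m' t2 G2 L2 N2 r G' L' N'.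
Proof.
  intros Hm HK He HN H.
  destruct (runs_layer_inv _ _ _ _ _ _ _ _ _ _ HK H)
    as (m' & r1 & G1 & L1 & N1 & t2 & G2 & L2 & N2 & Hm' & H1 & Hb & H2).
  destruct (runs_exp_inv m' e G L N r1 G1 L1 N1) as (vs & -> & -> & -> & Hbs); [lia | auto..].
  exists vs, G1, m', t2, G2, L2, N2; auto.
Qed.

Lemma runs_arg_inv m k Ms e ws G L N r G' L' N' :
  m <= n -> src_expr e -> src_nspace N ->
  runs m (call k (Ms ++ e :: map lit ws)) G L N r G' L' N' ->
  exists v G1 L1 m', m' <= m /\ bs_exp e G L N [v] G1 L1 N /\
    runs m' (call k (Ms ++ lit v :: map lit ws)) G1 L1 N r G' L' N'.
Proof.
  intros Hm He HN H; destruct (final_or_nonfinal e) as [Hf | Hnf].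
  - inversion He as [v | | |]; subst; try solve [inversion Hf].
    exists v, G, L, m; repeat split; auto; constructor.
  - change (call k (Ms ++ e :: map lit ws)) with (plug1 (KCall k Ms ws) e) in H.
    destruct (runs_plug1_inv Hnf H)
      as (m' & r1 & G1 & L1 & N1 & Hm' & H1 & H2).
    destruct (runs_exp_inv m' e G L N r1 G1 L1 N1 ltac:(lia) He HN H1)
      as (vs & -> & -> & -> & Hbs).
    destruct (runs_call_hole_lit ltac:(constructor) H2) as [v Hv].
    injection Hv as ->.
    exists v, G1, L, m'; repeat split; auto; lia.
Qed.

Lemma runs_args_inv k args : Forall src_expr args ->
  forall m ws G L N r G' L' N', m <= n -> src_nspace N ->
  runs m (call k (args ++ map lit ws)) G L N r G' L' N' ->
  exists vs G1 L1 m', bs_args args G L N vs G1 L1 N /\ m' <= m /\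
    runs m' (call k (map lit (vs ++ ws))) G1 L1 N r G' L' N'.
Proof.
  induction args as [| e Ms IHMs] using rev_ind; intros Hs m ws G L N r G' L' N' Hm HN H.
  - exists [], G, L, m; repeat split; auto; constructor.
  - apply Forall_app in Hs as [HMs He]; inversion He as [| ? ? He' _]; subst.
    rewrite <- app_assoc in H; simpl in H.
    destruct (runs_arg_inv _ _ _ _ _ _ _ _ _ _ _ _ Hm He' HN H)
      as (v & G1 & L1 & m1 & Hm1 & Hv & H1).
    change (Ms ++ lit v :: map lit ws) with (Ms ++ map lit (v :: ws)) in H1.
    destruct (IHMs HMs m1 (v :: ws) _ _ _ _ _ _ _ ltac:(lia) HN H1)
      as (vs & G2 & L2 & m2 & Hargs & Hm2 & H2).
    exists (vs ++ [v]), G2, L2, m2; repeat split; [| lia |].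
    + eapply bs_args_snoc; eassumption.
    + rewrite <- app_assoc; exact H2.
Qed.

Lemma runs_call_inv k args : Forall src_expr args ->
  forall G L N r G' L' N', src_nspace N -> runs n (call k args) G L N r G' L' N' ->
  exists vs G1 L1 m, bs_args args G L N vs G1 L1 N /\ m <= n /\
    runs m (call k (map lit vs)) G1 L1 N r G' L' N'.
Proof.
  intros Hargs G L N r G' L' N' HN H.
  rewrite <- (app_nil_r args) in H; change [] with (map (@lit D) []) in H.
  destruct (runs_args_inv k args Hargs n [] _ _ _ _ _ _ _ (le_n n) HN H)
    as (vs & G1 & L1 & m & Hbs & Hm & H1).
  rewrite app_nil_r in H1; eauto 7.
Qed.

Lemma exp_complete_step : exp_complete n.
Proof.
  intros e G L N r G' L' N' He HN H; inversion He as [v | x | f args Hargs | op args Hargs]; subst.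
  - destruct (runs_final_inv (final_tup _) H) as (-> & -> & -> & ->).
    eexists; split; [reflexivity | constructor].
  - destruct (runs_redex_inv n (Var x) G L N r G' L' N')
      as (m & t1 & G1 & L1 & N1 & Hm & Hb & Hr); [inversion 1 | not_plug1 | exact H |].
    inversion Hb; subst.
    destruct (runs_final_inv (final_tup _) Hr) as (-> & -> & -> & ->).
    eexists; split; [reflexivity | constructor; assumption].
  - destruct (runs_call_inv (inl f) args Hargs _ _ _ _ _ _ _ HN H)
      as (vs & G1 & L1 & m & Hbs & Hm & H1).
    destruct (runs_call_values_inv H1)
      as (m1 & t1 & G2 & L2 & N2 & Hm1 & Hb & H2).
    inversion Hb; subst.
    match goal with e : map lit _ = map lit _ |- _ => apply map_lit_inj in e; subst end.
    match goal with Hf : _ f = Some _ |- _ => destruct (HN _ _ _ _ Hf) as [b [-> Hb0]] end.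
    destruct (runs_frame_inv H2)
      as (m2 & r1 & L3 & rs & Hm2 & Hbody & Hr1 & Hrs & -> & ->).
    destruct (runs_stmt_inv m2 false (Block b) _ _ _ r1 G' L3 N' ltac:(lia)
                ltac:(constructor; exact Hb0) HN
                ltac:(destruct Hr1 as [-> | ->]; constructor) Hbody)
      as [Hbb ->].
    exists rs; split; [reflexivity | eapply bs_funcall; eassumption].
  - destruct (runs_call_inv (inr op) args Hargs _ _ _ _ _ _ _ HN H)
      as (vs & G1 & L1 & m & Hbs & Hm & H1).
    destruct (runs_call_values_inv H1)
      as (m1 & t1 & G2 & L2 & N2 & Hm1 & Hb & H2).
    inversion Hb; subst;
      match goal with e : map lit _ = map lit _ |- _ => apply map_lit_inj in e; subst end.
    + destruct (runs_final_inv (final_tup _) H2) as (-> & -> & -> & ->).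
      eexists; split; [reflexivity | eapply bs_opccall; eassumption].
    + exfalso; eapply runs_ext_false; exact H2.
Qed.

Lemma runs_scoped_head_inv m lp h rest N0 L0 G L N r G' L' N' :
  m <= n -> src_stmt lp h -> src_nspace N ->
  runs m (Scoped (h :: rest) N0 L0) G L N r G' L' N' ->
  exists r1 G1 L1, bs h G L N r1 G1 L1 N /\ outcome lp r1 /\
    scoped_after m N0 L0 rest r1 G1 L1 N r G' L' N'.
Proof.
  intros Hm Hh HN H.
  destruct (runs_scoped_inv H)
    as (m1 & r1 & G1 & L1 & N1 & Hm1 & H1 & Hafter).
  destruct (runs_stmt_inv m1 lp h G L N r1 G1 L1 N1) as [Hbs ->];
    [lia | exact Hh | exact HN | eapply scoped_after_outcome; eassumption | exact H1 |].
  exists r1, G1, L1; eauto using bs_outcome.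
Qed.

Lemma runs_scoped_complete lp ss : Forall (src_stmt lp) ss ->
  forall m N0 L0 G L N r G' L' N', m <= n -> src_nspace N ->
  runs m (Scoped ss N0 L0) G L N r G' L' N' ->
  exists L1, bs_seq ss G L N r G' L1 N /\ L' = restrict L1 L0 /\ N' = N0.
Proof.
  induction 1 as [| s ss Hs Hss IHss]; intros m N0 L0 G L N r G' L' N' Hm HN H.
  - destruct (runs_redex_inv m (Scoped [] N0 L0) G L N r G' L' N')
      as (? & ? & ? & ? & ? & _ & Hb & _); [inversion 1 | not_plug1 | exact H | inversion Hb].
  - destruct (runs_scoped_head_inv _ _ _ _ _ _ _ _ _ _ _ _ _ Hm Hs HN H)
      as (r1 & G1 & L1 & Hbs & _ & Hafter).
    inversion Hafter; subst.
    + match goal with h : runs ?m2 (Scoped ss N0 L0) _ _ _ _ _ _ _ |- _ =>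
        destruct (IHss m2 N0 L0 G1 L1 N r G' L' N' ltac:(lia) HN h) as (L2 & Hseq & -> & ->)
      end.
      exists L2; split; [econstructor; eassumption | auto].
    + exists L1; split; [econstructor; [eassumption | constructor] | auto].
    + exists L1; split; [apply bs_seq_irreg; assumption | auto].
Qed.

Lemma runs_loop_recur_complete m c p b v G L N G1 M' G2 L2 G3 L3 r1 G' L' N' r :
  m <= n -> Forall (src_stmt false) p -> Forall (src_stmt true) b -> src_expr c -> src_nspace N ->
  bs_exp c G L N [v] G1 L N -> is_true_val D v ->
  bs (Block b) G1 L N M' G2 L2 N -> M' = regular \/ M' = Mode MContinue ->
  bs (Block p) G2 L2 N regular G3 L3 N ->
  runs m (Scoped [For [] c p b] N L) G3 L3 N r1 G' L' N' ->
  base_step (Brk r1, G', L', N') (r, G', L', N') ->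
  bs (For [] c p b) G L N r G' L' N'.
Proof.
  intros Hm Hp Hb Hc HN Hcond Hv Hbody HM' Hpost H Hbrk.
  destruct (runs_scoped_head_inv m false (For [] c p b) [] N L G3 L3 N r1 G' L' N')
    as (r5 & G4 & L4 & Hloop & Hout & Hafter);
    [exact Hm | apply src_for; auto | exact HN | exact H |].
  assert (Hdom : dom_sub L4 L).
  { eapply dom_sub_trans; [apply (bs_loop_dom_sub Hloop) |].
    eapply dom_sub_trans; [apply (bs_block_dom_sub Hpost) |].
    exact (bs_block_dom_sub Hbody). }
  inversion Hout; subst; inversion Hafter; subst; try congruence;
    inversion Hbrk; subst; rewrite restrict_dom_sub by exact Hdom;
    eapply bs_for_loop; eassumption.
Qed.

Lemma runs_loop_post_complete m c p b v G L N G1 M' G2 L2 r1 G' L' N' r :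
  m <= n -> Forall (src_stmt false) p -> Forall (src_stmt true) b -> src_expr c -> src_nspace N ->
  bs_exp c G L N [v] G1 L N -> is_true_val D v ->
  bs (Block b) G1 L N M' G2 L2 N -> M' = regular \/ M' = Mode MContinue ->
  runs m (Scoped [Block p; For [] c p b] N L) G2 L2 N r1 G' L' N' ->
  base_step (Brk r1, G', L', N') (r, G', L', N') ->
  bs (For [] c p b) G L N r G' L' N'.
Proof.
  intros Hm Hp Hb Hc HN Hcond Hv Hbody HM' H Hbrk.
  destruct (runs_scoped_head_inv m false (Block p) [For [] c p b] N L G2 L2 N r1 G' L' N')
    as (r4 & G3 & L3 & Hpost & Hout & Hafter);
    [exact Hm | constructor; exact Hp | exact HN | exact H |].
  inversion Hout; subst; inversion Hafter; subst.
  - match goal with h : runs ?m' (Scoped [For [] c p b] N L) _ _ _ _ _ _ _ |- _ =>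
      apply (runs_loop_recur_complete m') with (6 := Hcond) (8 := Hbody) (10 := Hpost) (11 := h);
        auto; lia
    end.
  - inversion Hbrk; subst.
    rewrite restrict_dom_sub; [eapply bs_for_halt2; eassumption |].
    eapply dom_sub_trans; [apply (bs_block_dom_sub Hpost) |].
    exact (bs_block_dom_sub Hbody).
Qed.

Lemma runs_loop_iteration_complete m c p b v G L N G1 r1 G' L' N' r :
  m <= n -> Forall (src_stmt false) p -> Forall (src_stmt true) b -> src_expr c -> src_nspace N ->
  bs_exp c G L N [v] G1 L N -> is_true_val D v ->
  runs m (Scoped (loop_unfold c p b) N L) G1 L N r1 G' L' N' ->
  base_step (Brk r1, G', L', N') (r, G', L', N') ->
  bs (For [] c p b) G L N r G' L' N'.
Proof.
  intros Hm Hp Hb Hc HN Hcond Hv H Hbrk.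
  destruct (runs_scoped_inv H)
    as (m1 & r2 & G2 & L2 & N2 & Hm1 & Hcnt & Hafter).
  destruct (runs_catch_inv m1 KCnt (Block b) G1 L N r2 G2 L2 N2 ltac:(auto) Hcnt)
    as (m2 & r3 & Hm2 & Hbody & Hcnt_step).
  assert (Hr3 : outcome true r3) by (inversion Hcnt_step; constructor).
  destruct (runs_stmt_inv m2 true (Block b) G1 L N r3 G2 L2 N2) as [Hbb ->];
    [lia | constructor; auto | auto | auto | auto |].
  assert (Hdom : dom_sub L2 L) by exact (bs_block_dom_sub Hbb).
  inversion Hcnt_step; subst.
  - inversion Hafter; subst.
    match goal with h : runs ?m3 (Scoped [Block p; For [] c p b] N L) _ _ _ _ _ _ _ |- _ =>
      eapply (runs_loop_post_complete m3); try eassumption; auto; lia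
    end.
  - inversion Hafter; subst; inversion Hbrk; subst; rewrite restrict_dom_sub by exact Hdom.
    eapply bs_for_halt1; eauto.
  - inversion Hafter; subst; inversion Hbrk; subst; rewrite restrict_dom_sub by exact Hdom.
    eapply bs_for_halt1; eauto.
  - inversion Hafter; subst.
    match goal with h : runs ?m3 (Scoped [Block p; For [] c p b] N L) _ _ _ _ _ _ _ |- _ =>
      eapply (runs_loop_post_complete m3); try eassumption; auto; lia
    end.
Qed.

Lemma runs_loop_complete m c p b G L N r G' L' N' :
  m <= n -> Forall (src_stmt false) p -> Forall (src_stmt true) b -> src_expr c -> src_nspace N ->
  runs m (Brk (If c (loop_unfold c p b))) G L N r G' L' N' ->
  bs (For [] c p b) G L N r G' L' N'.
Proof.
  intros Hm Hp Hb Hc HN H.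
  destruct (runs_catch_inv m KBrk _ G L N r G' L' N' ltac:(auto) H)
    as (m1 & r1 & Hm1 & Hif & Hbrk).
  destruct (runs_hole_exp_inv m1 (KIf (loop_unfold c p b)) c G L N r1 G' L' N')
    as (vs & G1 & m2 & t2 & G2 & L2 & N2 & Hm2 & Hcond & Hstep & H2);
    [lia | exact I | exact Hc | exact HN | exact Hif |].
  inversion Hstep; subst.
  - destruct (runs_final_inv ltac:(constructor) H2) as (-> & -> & -> & ->).
    inversion Hbrk; subst; eapply bs_for_false; eassumption.
  - destruct (runs_block_inv H2)
      as [[Hnil _] | (_ & _ & m3 & Hm3 & H3)]; [discriminate Hnil |].
    rewrite funs_loop_unfold, dunion_none in H3.
    eapply (runs_loop_iteration_complete m3); eauto; lia.
Qed.

Lemma runs_block_complete lp ss G L N r G' L' N' :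
  Forall (src_stmt lp) ss -> src_nspace N -> runs n (Block ss) G L N r G' L' N' ->
  bs (Block ss) G L N r G' L' N'.
Proof.
  intros Hss HN H.
  destruct (runs_block_inv H)
    as [(-> & -> & -> & -> & ->) | (_ & Hdis & m & Hm & H1)].
  - rewrite <- (restrict_self L) at 2.
    apply bs_block; [intro; right; reflexivity | constructor].
  - destruct (runs_scoped_complete lp ss Hss m N L G L _ r G' L' N' ltac:(lia)
                (src_nspace_dunion _ _ _ HN Hss) H1) as (L1 & Hseq & -> & ->).
    apply bs_block; assumption.
Qed.

Lemma runs_for_complete lp i c p b G L N r G' L' N' :
  src_stmt lp (For i c p b) -> src_nspace N -> outcome true r ->
  runs n (For i c p b) G L N r G' L' N' -> bs (For i c p b) G L N r G' L' N'.
Proof.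
  intros HS HN Hr H.
  destruct (runs_redex_inv n (For i c p b) G L N r G' L' N')
    as (m & t1 & G1 & L1 & N1 & Hm & Hstep & H1); [inversion 1 | not_plug1 | exact H |].
  inversion Hstep; subst.
  - destruct (runs_stmt_inv m false _ _ _ _ r G' L' N' Hm (src_for_init_block _ _ _ _ _ HS)
                HN Hr H1) as [Hbb ->].
    apply bs_for_init; assumption.
  - inv_src HS; eapply runs_loop_complete; [| eassumption ..]; lia.
Qed.

Lemma stmt_complete_step : stmt_complete n.
Proof.
  intros lp S G L N r G' L' N' HS HN Hr H.
  destruct HS as [lp ss Hss | lp f ys zs body | lp xs e He | lp xs e He | lp e He
                 | lp c b Hc Hb | lp c cs d Hc Hcs Hd | lp i c p b Hi Hc Hp Hb | | | lp].
  - eapply runs_block_complete; eassumption.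
  - destruct (runs_redex_inv n (FunDef f ys zs body) G L N r G' L' N')
      as (m & t1 & G1 & L1 & N1 & _ & Hb & H1); [inversion 1 | not_plug1 | exact H |].
    inversion Hb; subst.
    destruct (runs_final_inv ltac:(constructor) H1) as (-> & -> & -> & ->).
    constructor.
  - destruct (runs_hole_exp_inv n (KLet xs) e G L N r G' L' N' (le_n n) I He HN H)
      as (vs & G1 & m & t2 & G2 & L2 & N2 & _ & Hbs & Hb & H2).
    inversion Hb; subst.
    destruct (runs_final_inv ltac:(constructor) H2) as (-> & -> & -> & ->).
    eapply bs_let; eassumption.
  - destruct (runs_hole_exp_inv n (KAssign xs) e G L N r G' L' N' (le_n n) I He HN H)
      as (vs & G1 & m & t2 & G2 & L2 & N2 & _ & Hbs & Hb & H2).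
    inversion Hb; subst.
    destruct (runs_final_inv ltac:(constructor) H2) as (-> & -> & -> & ->).
    eapply bs_assign; eassumption.
  - destruct (exp_complete_step e G L N r G' L' N' He HN H) as [vs [-> Hbs]].
    inversion Hr; subst.
    pose proof (bs_exp_nspace Hbs) as ->.
    apply bs_expstmt; exact Hbs.
  - destruct (runs_hole_exp_inv n (KIf b) c G L N r G' L' N' (le_n n) I Hc HN H)
      as (vs & G1 & m & t2 & G2 & L2 & N2 & Hm & Hbs & Hstep & H2).
    inversion Hstep; subst.
    + destruct (runs_final_inv ltac:(constructor) H2) as (-> & -> & -> & ->).
      eapply bs_if_false; eassumption.
    + destruct (runs_stmt_inv m lp (Block b) _ _ _ r G' L' N' ltac:(lia)
                  ltac:(constructor; exact Hb) HN Hr H2) as [Hbb ->].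
      eapply bs_if_true; eassumption.
  - destruct (runs_hole_exp_inv n (KSwitch cs d) c G L N r G' L' N' (le_n n) I Hc HN H)
      as (vs & G1 & m & t2 & G2 & L2 & N2 & Hm & Hbs & Hstep & H2).
    inversion Hstep; subst.
    + destruct (runs_stmt_inv m lp (Block d) _ _ _ r G' L' N' ltac:(lia)
                  ltac:(constructor; exact Hd) HN Hr H2) as [Hbd ->].
      eapply bs_switch_default; eassumption.
    + destruct (runs_stmt_inv m lp (Block sk) _ _ _ r G' L' N' ltac:(lia)
                  ltac:(constructor; eapply Forall_case_body; eassumption) HN Hr H2) as [Hbk ->].
      eapply bs_switch_case; eassumption.
  - eapply (runs_for_complete lp); [apply src_for | ..]; eassumption.
  - destruct (runs_final_inv final_break H) as (-> & -> & -> & ->).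
    constructor; auto.
  - destruct (runs_final_inv final_continue H) as (-> & -> & -> & ->).
    constructor; auto.
  - destruct (runs_final_inv final_leave H) as (-> & -> & -> & ->).
    constructor; auto.
Qed.

End CompletenessStep.

Lemma runs_complete n : exp_complete n /\ stmt_complete n.
Proof.
  induction n as [n IH] using lt_wf_ind.
  split; [apply exp_complete_step | apply stmt_complete_step]; exact IH.
Qed.

End Adequacy.

Theorem theorem1 (D : dialect) (S : @term D) (G : genv D) (L : @lstate D) (N : @nspace D) :
  src_stmt false S -> src_nspace N -> fin_dom L -> fin_dom N ->
  forall (G' : genv D) (L' : @lstate D) (N' : @nspace D),
    bs S G L N regular G' L' N' <-> steps (S, G, L, N) (regular, G', L', N').
Proof.
  intros HS HN _ _ G' L' N'; split.
  - intro H; exact (bs_steps _ _ _ _ _ _ _ _ H false HS HN).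
  - intro H.
    destruct (steps_runs _ _ _ _ _ _ _ _ H (final_tup [])) as [n Hn].
    exact (proj2 (runs_complete n) false S G L N regular G' L' N' HS HN
             (outcome_regular true) Hn).
Qed.
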